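(* Let $p\in[2,\infty]$ with conjugate exponent $p^*$ (so $1/p+1/p^*=1$, $p^*=1$ if $p=\infty$), and let $m\geq 2$ be an integer. Then for every continuous $m$-linear form $T:X_p\times c_0\times\cdots\times c_0\to\mathbb{C}$, $$\Big(\sum_{i_1=1}^\infty\Big(\sum_{i_2,\ldots,i_m=1}^\infty|T(e_{i_1},\ldots,e_{i_m})|^2\Big)^{p^*/2}\Big)^{1/p^*}\le (S_{m-1,p^*})^{-1}\|T\|;$$ that is, the optimal constant $C^{id,(p,\infty,\ldots,\infty)\mathbb{C}}_{(p^*,2,\ldots,2)}$ in this inequality satisfies $C^{id,(p,\infty,\ldots,\infty)\mathbb{C}}_{(p^*,2,\ldots,2)}\le(S_{m-1,p^*})^{-1}$.
   Context: $X_p=\ell_p(\mathbb{C})$ for $p<\infty$ and $X_\infty=c_0(\mathbb{C})$; $(e_k)$ are the canonical unit vectors; $\|T\|=\sup\{|T(x^{(1)},\ldots,x^{(m)})|:\|x^{(i)}\|\le1\}$. $S_{k,q}$ ($k\ge1$, $0<q<\infty$) denotes the largest constant $S$ such that for all $N$ and all complex arrays $(a_{i_1\ldots i_k})_{i_1,\ldots,i_k=1}^N$, $S(\sum|a_{i_1\ldots i_k}|^2)^{1/2}\le(\mathbb{E}|\sum a_{i_1\ldots i_k}\varepsilon^{(1)}_{i_1}\cdots\varepsilon^{(k)}_{i_k}|^q)^{1/q}$, where $\varepsilon^{(j)}_n$ are independent Steinhaus variables (uniformly distributed on the unit circle). *)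

From Stdlib Require Import Reals.
From Coquelicot Require Import Coquelicot.
Open Scope R_scope.

(* power with rpow 0 y = 0 (used only for y > 0) *)
Definition rpow (x y : R) : R :=
  match Rlt_dec 0 x with left _ => Rpower x y | right _ => 0 end.

Fixpoint fsum {A : Type} (plus : A -> A -> A) (z : A) (N : nat) (g : nat -> A) : A :=
  match N with O => z | S N' => plus (fsum plus z N' g) (g N') end.

(* sum over multi-indices i : nat -> nat with i j in [0,N) for j < k
   (i j = 0 for j >= k); i 0 is the first index *)
Fixpoint msum {A : Type} (plus : A -> A -> A) (z : A) (k N : nat)
  (f : (nat -> nat) -> A) : A :=
  match k with
  | O => f (fun _ => O)
  | S k' => fsum plus z N (fun n =>
      msum plus z k' N (fun i => f (fun j => match j with O => n | S j' => i j' end)))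
  end.

Definition cis (t : R) : C := (cos t, sin t).

(* Expectation over n independent Steinhaus variables, realized as
   normalized iterated integral over angles th 0, ..., th (n-1) in [0, 2 PI]. *)
Fixpoint steinE (n : nat) (f : (nat -> R) -> R) : R :=
  match n with
  | O => f (fun _ => 0)
  | S n' => / (2 * PI) * RInt (fun t =>
      steinE n' (fun th => f (fun l => if Nat.eqb l n' then t else th l))) 0 (2 * PI)
  end.

(* the variable eps^{(j)}_n (j < k, n < N) is cis (th (j*N + n)) *)
Definition steinSum (k N : nat) (a : (nat -> nat) -> C) (th : nat -> R) : C :=
  msum Cplus 0%C k N (fun i =>
    Cmult (a i) (fsum Cmult 1%C k (fun j => cis (th (j * N + i j)%nat)))).

(* S is an admissible constant in the multilinear Khinchin inequality *)
Definition khinchin_ok (k : nat) (q S : R) : Prop :=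
  forall (N : nat) (a : (nat -> nat) -> C),
    S * sqrt (msum Rplus 0 k N (fun i => (Cmod (a i)) ^ 2))
    <= rpow (steinE (k * N) (fun th => rpow (Cmod (steinSum k N a th)) q)) (/ q).

Definition S_const (k : nat) (q : R) : R := real (Lub_Rbar (khinchin_ok k q)).

(* X_p : l_p(C) for p finite, c_0(C) for p = +oo *)
Definition inX (p : Rbar) (x : nat -> C) : Prop :=
  match p with
  | Finite r => ex_series (fun n => rpow (Cmod (x n)) r)
  | _ => is_lim_seq (fun n => Cmod (x n)) 0
  end.

Definition normX (p : Rbar) (x : nat -> C) : R :=
  match p with
  | Finite r => rpow (Series (fun n => rpow (Cmod (x n)) r)) (/ r)
  | _ => real (Lub_Rbar (fun s => exists n, s = Cmod (x n)))
  end.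

Definition conj_exp (p : Rbar) : R :=
  match p with Finite r => r / (r - 1) | _ => 1 end.

Definition slot_exp (p : Rbar) (k : nat) : Rbar :=
  match k with O => p | S _ => p_infty end.

(* an m-linear form is T : (nat -> (nat -> C)) -> C, x k = k-th argument (k < m) *)
Definition inDom (m : nat) (p : Rbar) (x : nat -> nat -> C) : Prop :=
  forall k, (k < m)%nat -> inX (slot_exp p k) (x k).

Definition upd (x : nat -> nat -> C) (k : nat) (v : nat -> C) : nat -> nat -> C :=
  fun l => if Nat.eqb l k then v else x l.

Definition only_first (m : nat) (T : (nat -> nat -> C) -> C) : Prop :=
  forall x y, (forall k, (k < m)%nat -> x k = y k) -> T x = T y.

Definition multilinear (m : nat) (p : Rbar) (T : (nat -> nat -> C) -> C) : Prop :=
  forall x k, inDom m p x -> (k < m)%nat ->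
  forall (y z : nat -> C) (a b : C),
    inX (slot_exp p k) y -> inX (slot_exp p k) z ->
    T (upd x k (fun n => a * y n + b * z n)%C)
    = (a * T (upd x k y) + b * T (upd x k z))%C.

Definition continuous_form (m : nat) (p : Rbar) (T : (nat -> nat -> C) -> C) : Prop :=
  forall x, inDom m p x -> forall eps, 0 < eps -> exists delta, 0 < delta /\
    forall y, inDom m p y ->
      (forall k, (k < m)%nat -> normX (slot_exp p k) (fun n => x k n - y k n)%C < delta) ->
      Cmod (T y - T x)%C < eps.

Definition opnorm (m : nat) (p : Rbar) (T : (nat -> nat -> C) -> C) : R :=
  real (Lub_Rbar (fun s => exists x, inDom m p x /\
     (forall k, (k < m)%nat -> normX (slot_exp p k) (x k) <= 1) /\ s = Cmod (T x))).

Definition unitv (i : nat) : nat -> C := fun n => if Nat.eqb n i then 1%C else 0%C.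

Definition mixed_sum (m : nat) (ps : R) (T : (nat -> nat -> C) -> C) (N : nat) : R :=
  rpow (fsum Rplus 0 N (fun i1 =>
     rpow (msum Rplus 0 (m - 1) N (fun i =>
        (Cmod (T (fun k => match k with O => unitv i1 | S k' => unitv (i k') end))) ^ 2))
       (ps / 2))) (/ ps).

From Stdlib Require Import Reals Lra Lia FunctionalExtensionality.
From Coquelicot Require Import Coquelicot.
Open Scope R_scope.

(* Fix the Steinhaus angles and put the vectors [(eps^(j)_n)_(n < N)], of sup norm 1, into the
   [c_0] slots of [T].  What is left is a functional on [X_p] of norm at most [||T||], so by
   [l_p]-[l_q] duality [sum_i1 |T(e_i1, eps^(1), ..., eps^(m-1))|^q <= ||T||^q], [q = p*].  Each
   [T(e_i1, eps^(1), ...)] is the [(m-1)]-linear Steinhaus sum with coefficients [T(e_i1, e_i2, ...)];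
   averaging over the angles and applying the Khinchin inequality with an admissible constant [S]
   to each [i1] gives [S^q sum_i1 (sum_i2..im |T(e_i1, ..., e_im)|^2)^(q/2) <= ||T||^q], and the
   supremum over [S] is [S_(m-1,q)].  This supremum is positive: for linear sums the second and
   fourth moments give [||f||_2 <= sqrt 2 ||f||_1], induction on the number of blocks with
   Minkowski's inequality gives the constant [2^(-k/2)] in [L^1], and Lyapunov's inequality passes
   from [L^1] to [L^q]. *)

Lemma fsum_ext_lt {A : Type} (plus : A -> A -> A) z N g h :
  (forall n, (n < N)%nat -> g n = h n) -> fsum plus z N g = fsum plus z N h.
Proof.
  induction N as [|N IH]; intros H; simpl; auto.
  rewrite IH, H by (auto; lia). reflexivity.
Qed.

Lemma fsum_ext {A : Type} (plus : A -> A -> A) z N g h :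
  (forall n, g n = h n) -> fsum plus z N g = fsum plus z N h.
Proof. intros H. apply fsum_ext_lt. auto. Qed.

Lemma msum_ext {A : Type} (plus : A -> A -> A) z k N f g :
  (forall i, f i = g i) -> msum plus z k N f = msum plus z k N g.
Proof. intros H. replace g with f; auto. extensionality i; auto. Qed.

Lemma fsum_succ_l {A : Type} (plus : A -> A -> A) z N g :
  (forall a b c, plus a (plus b c) = plus (plus a b) c) -> (forall a, plus z a = plus a z) ->
  fsum plus z (S N) g = plus (g O) (fsum plus z N (fun n => g (S n))).
Proof.
  intros Hassoc Hz. induction N as [|N IH]; [apply Hz|].
  change (fsum plus z (S (S N)) g) with (plus (fsum plus z (S N) g) (g (S N))).
  rewrite IH, <- Hassoc. reflexivity.
Qed.

Lemma fsum_Rplus_succ_l N g : fsum Rplus 0 (S N) g = g O + fsum Rplus 0 N (fun n => g (S n)).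
Proof. apply fsum_succ_l; intros; ring. Qed.

Lemma fsum_Cmult_succ_l k g : fsum Cmult 1%C (S k) g = (g O * fsum Cmult 1%C k (fun j => g (S j)))%C.
Proof. apply fsum_succ_l; intros; ring. Qed.

Lemma fsum_scal N c f : fsum Rplus 0 N (fun n => c * f n) = c * fsum Rplus 0 N f.
Proof. induction N as [|N IH]; simpl; [|rewrite IH]; ring. Qed.

Lemma fsum_Cscal N w g : fsum Cplus 0%C N (fun n => w * g n)%C = (w * fsum Cplus 0%C N g)%C.
Proof. induction N as [|N IH]; simpl; [|rewrite IH]; ring. Qed.

Lemma msum_Cscal k : forall N w f,
  msum Cplus 0%C k N (fun i => w * f i)%C = (w * msum Cplus 0%C k N f)%C.
Proof.
  induction k as [|k IH]; intros N w f; simpl; auto.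
  rewrite <- fsum_Cscal. apply fsum_ext. intros n. apply IH.
Qed.

Lemma fsum_RtoC N f : fsum Cplus 0%C N (fun n => RtoC (f n)) = RtoC (fsum Rplus 0 N f).
Proof. induction N as [|N IH]; simpl; auto. rewrite IH, RtoC_plus. auto. Qed.

Lemma fsum_nonneg N f : (forall n, 0 <= f n) -> 0 <= fsum Rplus 0 N f.
Proof. intros H. induction N as [|N IH]; simpl; [lra|]. specialize (H N). lra. Qed.

Lemma msum_nonneg k : forall N f, (forall i, 0 <= f i) -> 0 <= msum Rplus 0 k N f.
Proof. induction k as [|k IH]; intros N f H; simpl; auto. apply fsum_nonneg. auto. Qed.

Lemma fsum_le N f g : (forall n, f n <= g n) -> fsum Rplus 0 N f <= fsum Rplus 0 N g.
Proof. intros H. induction N as [|N IH]; simpl; [lra|]. specialize (H N). lra. Qed.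

Lemma fsum_term_le N f n : (forall k, 0 <= f k) -> (n < N)%nat -> f n <= fsum Rplus 0 N f.
Proof.
  intros Hf Hn. induction N as [|N IH]; [lia|]. simpl.
  destruct (Nat.eq_dec n N) as [->|Hne].
  - generalize (fsum_nonneg N f Hf). lra.
  - generalize (IH ltac:(lia)) (Hf N). lra.
Qed.

Lemma quadratic_nonneg_discr A B C : 0 <= A ->
  (forall t, 0 <= A * t ^ 2 + 2 * C * t + B) -> C ^ 2 <= A * B.
Proof.
  intros HA HQ.
  destruct HA as [HA|HA].
  - specialize (HQ (- C / A)).
    replace (A * (- C / A) ^ 2 + 2 * C * (- C / A) + B) with ((A * B - C ^ 2) / A) in HQ by (field; lra).
    apply Rmult_le_compat_r with (r := A) in HQ; [|lra].
    replace ((A * B - C ^ 2) / A * A) with (A * B - C ^ 2) in HQ by (field; lra). lra.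
  - subst A. destruct (Req_dec C 0) as [->|HC]; [simpl; lra|].
    specialize (HQ (- (B + 1) / (2 * C))).
    replace (0 * (- (B + 1) / (2 * C)) ^ 2 + 2 * C * (- (B + 1) / (2 * C)) + B) with (-1) in HQ
      by (field; auto). lra.
Qed.

Lemma fsum_cauchy_schwarz N a b :
  fsum Rplus 0 N (fun n => a n * b n)
  <= sqrt (fsum Rplus 0 N (fun n => a n ^ 2)) * sqrt (fsum Rplus 0 N (fun n => b n ^ 2)).
Proof.
  rewrite <- sqrt_mult by (apply fsum_nonneg; intros; apply pow2_ge_0).
  eapply Rle_trans; [apply Rle_abs|]. rewrite <- sqrt_Rsqr_abs. apply sqrt_le_1_alt.
  rewrite Rsqr_pow2. apply quadratic_nonneg_discr; [apply fsum_nonneg; intros; apply pow2_ge_0|].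
  intros t.
  replace (fsum Rplus 0 N (fun n => a n ^ 2) * t ^ 2 + 2 * fsum Rplus 0 N (fun n => a n * b n) * t
           + fsum Rplus 0 N (fun n => b n ^ 2)) with (fsum Rplus 0 N (fun n => (a n * t + b n) ^ 2)).
  - apply fsum_nonneg. intros; apply pow2_ge_0.
  - induction N as [|N IH]; cbn [fsum]; [ring|]. rewrite IH. ring.
Qed.

(** * Means over the circle *)

Definition circle_mean (g : R -> R) : R := / (2 * PI) * RInt g 0 (2 * PI).

Lemma ex_RInt_circle (g : R -> R) : (forall t, continuous g t) -> ex_RInt g 0 (2 * PI).
Proof. intros Hg. apply (ex_RInt_continuous (V := R_CompleteNormedModule)); auto. Qed.

Section CircleMean.

Variables g h : R -> R.
Hypothesis g_cont : forall t, continuous g t.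
Hypothesis h_cont : forall t, continuous h t.

Lemma circle_mean_plus : circle_mean (fun t => g t + h t) = circle_mean g + circle_mean h.
Proof.
  unfold circle_mean. rewrite <- Rmult_plus_distr_l. f_equal.
  apply (RInt_plus (V := R_CompleteNormedModule)); apply ex_RInt_circle; auto.
Qed.

Lemma circle_mean_scal c : circle_mean (fun t => c * g t) = c * circle_mean g.
Proof.
  unfold circle_mean.
  rewrite (RInt_scal (V := R_CompleteNormedModule)) by (apply ex_RInt_circle; auto).
  unfold scal; simpl; unfold mult; simpl. ring.
Qed.

Lemma circle_mean_le : (forall t, g t <= h t) -> circle_mean g <= circle_mean h.
Proof.
  intros Hle. unfold circle_mean. apply Rmult_le_compat_l.
  - left. apply Rinv_0_lt_compat. generalize PI_RGT_0; lra.
  - apply RInt_le; try apply ex_RInt_circle; auto. generalize PI_RGT_0; lra.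
Qed.

End CircleMean.

Lemma circle_mean_const c : circle_mean (fun _ => c) = c.
Proof.
  unfold circle_mean. rewrite RInt_const. unfold scal; simpl; unfold mult; simpl.
  field. apply PI_neq0.
Qed.

Lemma circle_mean_ext (g h : R -> R) : (forall t, g t = h t) -> circle_mean g = circle_mean h.
Proof. intros H. unfold circle_mean. f_equal. apply RInt_ext. auto. Qed.

Lemma circle_mean_dist (g h : R -> R) e : (forall t, continuous g t) -> (forall t, continuous h t) ->
  (forall t, Rabs (g t - h t) <= e) -> Rabs (circle_mean g - circle_mean h) <= e.
Proof.
  intros Hg Hh Hd.
  assert (Hc : forall t, continuous (fun _ : R => e) t) by (intros; apply continuous_const).
  assert (Hshift : forall f : R -> R, (forall t, continuous f t) ->
            circle_mean (fun t => e + f t) = e + circle_mean f).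
  { intros f Hf. rewrite circle_mean_plus, circle_mean_const; auto. }
  assert (Hcont : forall f : R -> R, (forall t, continuous f t) -> forall t, continuous (fun t => e + f t) t).
  { intros f Hf t. apply (@continuous_plus R_UniformSpace R_AbsRing R_NormedModule); auto. }
  assert (circle_mean h <= e + circle_mean g).
  { rewrite <- Hshift by auto. apply circle_mean_le; auto.
    intros t. specialize (Hd t). apply Rabs_le_between in Hd. lra. }
  assert (circle_mean g <= e + circle_mean h).
  { rewrite <- Hshift by auto. apply circle_mean_le; auto.
    intros t. specialize (Hd t). apply Rabs_le_between in Hd. lra. }
  apply Rabs_le. lra.
Qed.

Lemma circle_mean_trig a b c d e f :
  circle_mean (fun t => a + b * cos t + c * sin t + d * cos t ^ 2 + e * (sin t * cos t) + f * sin t ^ 2)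
  = a + (d + f) / 2.
Proof.
  set (F := fun t => a * t + b * sin t - c * cos t + d * ((t + sin t * cos t) / 2)
                     + e * (sin t ^ 2 / 2) + f * ((t - sin t * cos t) / 2)).
  assert (H : is_RInt (fun t => a + b * cos t + c * sin t + d * cos t ^ 2 + e * (sin t * cos t)
                                + f * sin t ^ 2) 0 (2 * PI) (minus (F (2 * PI)) (F 0))).
  { apply (is_RInt_derive (V := R_CompleteNormedModule)).
    - intros x _. unfold F. auto_derive; auto.
      assert (Hc2 : cos x ^ 2 = 1 - sin x ^ 2) by (generalize (sin2_cos2 x); unfold Rsqr; simpl; lra).
      ring_simplify. rewrite Hc2. field.
    - intros x _. apply continuity_pt_filterlim. reg. }
  unfold circle_mean. rewrite (is_RInt_unique _ _ _ _ H). unfold F, minus, plus, opp; simpl.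
  rewrite sin_2PI, cos_2PI, sin_0, cos_0. field. apply PI_neq0.
Qed.

Lemma rotation_norm2 c1 c2 t :
  (c1 * cos t - c2 * sin t) ^ 2 + (c1 * sin t + c2 * cos t) ^ 2 = c1 ^ 2 + c2 ^ 2.
Proof.
  transitivity ((c1 ^ 2 + c2 ^ 2) * (sin t ^ 2 + cos t ^ 2)); [ring|].
  rewrite <- !Rsqr_pow2, sin2_cos2. ring.
Qed.

Lemma circle_mean_rotation_quadratic c1 c2 a b d e g h :
  circle_mean (fun t => a + b * (c1 * cos t - c2 * sin t) + d * (c1 * sin t + c2 * cos t)
      + e * (c1 * cos t - c2 * sin t) ^ 2
      + g * ((c1 * cos t - c2 * sin t) * (c1 * sin t + c2 * cos t))
      + h * (c1 * sin t + c2 * cos t) ^ 2)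
  = a + (e + h) * (c1 ^ 2 + c2 ^ 2) / 2.
Proof.
  rewrite (circle_mean_ext _ (fun t => a + (b * c1 + d * c2) * cos t + (- b * c2 + d * c1) * sin t
     + (e * c1 ^ 2 + g * c1 * c2 + h * c2 ^ 2) * cos t ^ 2
     + (- 2 * e * c1 * c2 + g * (c1 ^ 2 - c2 ^ 2) + 2 * h * c1 * c2) * (sin t * cos t)
     + (e * c2 ^ 2 - g * c1 * c2 + h * c1 ^ 2) * sin t ^ 2)) by (intros; ring).
  rewrite circle_mean_trig. field.
Qed.

Lemma Cmod2_re_im (z : C) : Cmod z ^ 2 = fst z ^ 2 + snd z ^ 2.
Proof. rewrite Cmod2_alt. reflexivity. Qed.

Lemma circle_mean_Cmod2_shift (z c : C) :
  circle_mean (fun t => Cmod (z + c * cis t)%C ^ 2) = Cmod z ^ 2 + Cmod c ^ 2.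
Proof.
  destruct z as [x y], c as [c1 c2]. rewrite !Cmod2_re_im. cbn [fst snd].
  rewrite (circle_mean_ext _ (fun t => (x ^ 2 + y ^ 2 + (c1 ^ 2 + c2 ^ 2))
     + 2 * x * (c1 * cos t - c2 * sin t) + 2 * y * (c1 * sin t + c2 * cos t)
     + 0 * (c1 * cos t - c2 * sin t) ^ 2 + 0 * ((c1 * cos t - c2 * sin t) * (c1 * sin t + c2 * cos t))
     + 0 * (c1 * sin t + c2 * cos t) ^ 2)).
  - rewrite circle_mean_rotation_quadratic. field.
  - intros t. rewrite Cmod2_re_im; cbn [fst snd Cplus Cmult cis]. rewrite <- (rotation_norm2 c1 c2 t). ring.
Qed.

Lemma circle_mean_Cmod4_shift (z c : C) :
  circle_mean (fun t => Cmod (z + c * cis t)%C ^ 4)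
  = Cmod z ^ 4 + 4 * Cmod z ^ 2 * Cmod c ^ 2 + Cmod c ^ 4.
Proof.
  replace 4%nat with (2 * 2)%nat by reflexivity. rewrite !pow_mult.
  destruct z as [x y], c as [c1 c2]. rewrite !Cmod2_re_im. cbn [fst snd].
  set (A := x ^ 2 + y ^ 2). set (rho := c1 ^ 2 + c2 ^ 2).
  rewrite (circle_mean_ext _ (fun t => (A + rho) ^ 2
     + 4 * (A + rho) * x * (c1 * cos t - c2 * sin t) + 4 * (A + rho) * y * (c1 * sin t + c2 * cos t)
     + 4 * x ^ 2 * (c1 * cos t - c2 * sin t) ^ 2
     + 8 * x * y * ((c1 * cos t - c2 * sin t) * (c1 * sin t + c2 * cos t))
     + 4 * y ^ 2 * (c1 * sin t + c2 * cos t) ^ 2)).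
  - rewrite circle_mean_rotation_quadratic. fold rho. unfold A. field.
  - intros t. rewrite pow_mult, Cmod2_re_im; cbn [fst snd Cplus Cmult cis].
    unfold rho. rewrite <- (rotation_norm2 c1 c2 t). unfold A. ring.
Qed.

Lemma rpow_Rpower x q : 0 < x -> rpow x q = Rpower x q.
Proof. intros H. unfold rpow. destruct (Rlt_dec 0 x); [auto | lra]. Qed.

Lemma rpow_nonpos x q : x <= 0 -> rpow x q = 0.
Proof. intros H. unfold rpow. destruct (Rlt_dec 0 x); [lra | auto]. Qed.

Lemma rpow_gt0 x q : 0 < x -> 0 < rpow x q.
Proof. intros H. rewrite rpow_Rpower by auto. apply exp_pos. Qed.

Lemma rpow_ge0 x q : 0 <= rpow x q.
Proof.
  destruct (Rlt_dec 0 x) as [H|H]; [left; apply rpow_gt0 | rewrite rpow_nonpos]; auto; lra.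
Qed.

Lemma rpow_0 q : rpow 0 q = 0.
Proof. apply rpow_nonpos; lra. Qed.

Lemma rpow_base1 q : rpow 1 q = 1.
Proof. rewrite rpow_Rpower by lra. unfold Rpower. rewrite ln_1, Rmult_0_r, exp_0. auto. Qed.

Lemma rpow_exp1 a : 0 <= a -> rpow a 1 = a.
Proof. intros [Ha|Ha]; [rewrite rpow_Rpower by auto; apply Rpower_1 | subst; apply rpow_0]; auto. Qed.

Lemma rpow_le_compat a b q : 0 <= a <= b -> 0 < q -> rpow a q <= rpow b q.
Proof.
  intros [[Ha|Ha] Hab] Hq.
  - rewrite !rpow_Rpower by lra. apply Rle_Rpower_l; lra.
  - subst. rewrite rpow_0. apply rpow_ge0.
Qed.

Lemma rpow_rpow a q r : 0 <= a -> rpow (rpow a q) r = rpow a (q * r).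
Proof.
  intros [Ha|Ha].
  - rewrite (rpow_Rpower a) by auto. rewrite rpow_Rpower by apply exp_pos.
    rewrite rpow_Rpower by auto. apply Rpower_mult.
  - subst. rewrite !rpow_0. auto.
Qed.

Lemma rpow_inv_l a q : 0 <= a -> 0 < q -> rpow (rpow a (/ q)) q = a.
Proof.
  intros Ha Hq. rewrite rpow_rpow by auto. replace (/ q * q) with 1 by (field; lra).
  apply rpow_exp1; auto.
Qed.

Lemma rpow_inv_r a q : 0 <= a -> 0 < q -> rpow (rpow a q) (/ q) = a.
Proof.
  intros Ha Hq. rewrite rpow_rpow by auto. replace (q * / q) with 1 by (field; lra).
  apply rpow_exp1; auto.
Qed.

Lemma rpow_mult_distr a b q : 0 <= a -> 0 <= b -> rpow (a * b) q = rpow a q * rpow b q.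
Proof.
  intros [Ha|Ha] [Hb|Hb]; try (subst; rewrite ?Rmult_0_r, ?Rmult_0_l, !rpow_0; ring).
  rewrite !rpow_Rpower by (try apply Rmult_lt_0_compat; auto). symmetry; apply Rpower_mult_distr; auto.
Qed.

Lemma rpow_plus a q r : 0 < a -> rpow a (q + r) = rpow a q * rpow a r.
Proof. intros Ha. rewrite !rpow_Rpower by auto. apply Rpower_plus. Qed.

Lemma rpow_opp a q : 0 < a -> rpow a (- q) = / rpow a q.
Proof. intros Ha. rewrite !rpow_Rpower by auto. apply Rpower_Ropp. Qed.

Lemma rpow_inv l q : 0 < l -> rpow (/ l) q = / rpow l q.
Proof.
  intros Hl. rewrite !rpow_Rpower by (try apply Rinv_0_lt_compat; auto).
  unfold Rpower. rewrite ln_Rinv, <- exp_Ropp by auto. f_equal. ring.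
Qed.

Lemma rpow_sqrt x q : 0 <= x -> rpow (sqrt x) q = rpow x (q / 2).
Proof.
  intros [Hx|Hx].
  - rewrite <- Rpower_sqrt by auto. rewrite <- (rpow_Rpower x (/ 2)) by auto.
    rewrite rpow_rpow by lra. f_equal. field.
  - subst. rewrite sqrt_0, !rpow_0. auto.
Qed.

Lemma rpow_continuity_pt q x : 0 < q -> 0 <= x -> continuity_pt (fun y => rpow y q) x.
Proof.
  intros Hq [Hx|Hx].
  - assert (Hc : continuity_pt (fun y => Rpower y q) x).
    { apply derivable_continuous_pt. exists (q * Rpower x (q - 1)). apply derivable_pt_lim_power; auto. }
    intros eps He. destruct (Hc eps He) as [alp [Ha K]].
    exists (Rmin alp x). split; [apply Rmin_pos; lra|].
    intros y [_ Hy]. simpl in *. unfold R_dist in *.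
    assert (Hy0 : 0 < y).
    { assert (Rabs (y - x) < x) by (eapply Rlt_le_trans; [exact Hy | apply Rmin_r]).
      apply Rabs_lt_between in H; lra. }
    rewrite !rpow_Rpower by auto. destruct (Req_dec y x) as [->|Hne].
    + rewrite Rminus_eq_0, Rabs_R0; lra.
    + apply K. repeat split; auto. eapply Rlt_le_trans; [exact Hy | apply Rmin_l].
  - subst x. intros eps He. exists (Rpower eps (/ q)). split; [apply exp_pos|].
    intros y [_ Hy]. simpl in *. unfold R_dist in *. rewrite rpow_0.
    destruct (Rle_lt_dec y 0) as [Hy0|Hy0].
    + rewrite rpow_nonpos by auto. rewrite Rminus_0_r, Rabs_R0; auto.
    + rewrite rpow_Rpower by auto. rewrite Rminus_0_r in Hy |- *.
      rewrite Rabs_pos_eq in Hy by lra. rewrite Rabs_pos_eq by (left; apply exp_pos).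
      unfold Rpower in *. apply ln_increasing in Hy; auto. rewrite ln_exp in Hy.
      rewrite <- (exp_ln eps) by auto. apply exp_increasing.
      apply Rmult_lt_compat_l with (r := q) in Hy; auto.
      replace (q * (/ q * ln eps)) with (ln eps) in Hy by (field; lra). lra.
Qed.

(* Uniform continuity in the sup distance of the angles is what makes every partial integrand
   [t |-> f (upd_angle th n t)] continuous, so that all the iterated Riemann means exist. *)
Definition unif_cont (f : (nat -> R) -> R) : Prop :=
  forall eps, 0 < eps -> exists d, 0 < d /\
    forall th th', (forall l, Rabs (th l - th' l) < d) -> Rabs (f th - f th') < eps.

Definition buc (f : (nat -> R) -> R) : Prop :=
  (exists B, forall th, Rabs (f th) <= B) /\ unif_cont f.

Definition cbuc (g : (nat -> R) -> C) : Prop :=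
  buc (fun th => fst (g th)) /\ buc (fun th => snd (g th)).

Lemma buc_bound f : buc f -> exists B, 0 <= B /\ forall th, Rabs (f th) <= B.
Proof.
  intros [[B H] _]. exists B. split; auto.
  specialize (H (fun _ => 0)). generalize (Rabs_pos (f (fun _ => 0))); lra.
Qed.

Lemma buc_ext f g : (forall th, f th = g th) -> buc f -> buc g.
Proof. intros H. replace g with f; auto. extensionality th; auto. Qed.

Lemma buc_const c : buc (fun _ => c).
Proof.
  split; [exists (Rabs c); intros; lra|].
  intros eps He. exists 1. split; [lra|]. intros. rewrite Rminus_eq_0, Rabs_R0; lra.
Qed.

Lemma buc_plus f g : buc f -> buc g -> buc (fun th => f th + g th).
Proof.
  intros [[B1 H1] U1] [[B2 H2] U2]. split.
  - exists (B1 + B2). intros th. eapply Rle_trans; [apply Rabs_triang|].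
    specialize (H1 th); specialize (H2 th); lra.
  - intros eps He. destruct (U1 (eps / 2)) as [d1 [Hd1 K1]]; [lra|].
    destruct (U2 (eps / 2)) as [d2 [Hd2 K2]]; [lra|].
    exists (Rmin d1 d2). split; [apply Rmin_pos; auto|]. intros th th' Hth.
    assert (A1 := K1 th th' (fun l => Rlt_le_trans _ _ _ (Hth l) (Rmin_l _ _))).
    assert (A2 := K2 th th' (fun l => Rlt_le_trans _ _ _ (Hth l) (Rmin_r _ _))).
    replace (f th + g th - (f th' + g th')) with ((f th - f th') + (g th - g th')) by ring.
    eapply Rle_lt_trans; [apply Rabs_triang | lra].
Qed.

Lemma buc_mult f g : buc f -> buc g -> buc (fun th => f th * g th).
Proof.
  intros Hf Hg.
  destruct (buc_bound f Hf) as [B1 [B1p H1]], (buc_bound g Hg) as [B2 [B2p H2]].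
  destruct Hf as [_ U1], Hg as [_ U2]. split.
  - exists (B1 * B2). intros th. rewrite Rabs_mult. apply Rmult_le_compat; auto using Rabs_pos.
  - intros eps He.
    destruct (U1 (eps / (2 * (B2 + 1)))) as [d1 [Hd1 K1]]; [apply Rdiv_lt_0_compat; lra|].
    destruct (U2 (eps / (2 * (B1 + 1)))) as [d2 [Hd2 K2]]; [apply Rdiv_lt_0_compat; lra|].
    exists (Rmin d1 d2). split; [apply Rmin_pos; auto|]. intros th th' Hth.
    assert (A1 := K1 th th' (fun l => Rlt_le_trans _ _ _ (Hth l) (Rmin_l _ _))).
    assert (A2 := K2 th th' (fun l => Rlt_le_trans _ _ _ (Hth l) (Rmin_r _ _))).
    replace (f th * g th - f th' * g th') with ((f th - f th') * g th + f th' * (g th - g th')) by ring.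
    eapply Rle_lt_trans; [apply Rabs_triang|]. rewrite !Rabs_mult.
    assert (E1 : Rabs (f th - f th') * Rabs (g th) <= eps / 2).
    { apply Rle_trans with (eps / (2 * (B2 + 1)) * (B2 + 1)); [|right; field; lra].
      apply Rmult_le_compat; auto using Rabs_pos; [lra | specialize (H2 th); lra]. }
    assert (E2 : Rabs (f th') * Rabs (g th - g th') < eps / 2).
    { apply Rle_lt_trans with ((B1 + 1) * Rabs (g th - g th')).
      - apply Rmult_le_compat_r; [apply Rabs_pos | specialize (H1 th'); lra].
      - apply Rlt_le_trans with ((B1 + 1) * (eps / (2 * (B1 + 1)))); [apply Rmult_lt_compat_l; lra|].
        right; field; lra. }
    lra.
Qed.

Lemma buc_scal c f : buc f -> buc (fun th => c * f th).
Proof. intros Hf. apply (buc_mult (fun _ => c)); auto using buc_const. Qed.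

Lemma buc_minus f g : buc f -> buc g -> buc (fun th => f th - g th).
Proof.
  intros Hf Hg. apply (buc_ext (fun th => f th + (-1) * g th)); [intros; ring|].
  apply buc_plus; auto. apply buc_scal; auto.
Qed.

Lemma buc_pow f n : buc f -> buc (fun th => f th ^ n).
Proof.
  intros Hf. induction n as [|n IH]; [apply (buc_ext (fun _ => 1)); [reflexivity | apply buc_const]|].
  apply (buc_ext (fun th => f th * f th ^ n)); [reflexivity|]. apply buc_mult; auto.
Qed.

Lemma buc_fsum N (h : nat -> (nat -> R) -> R) :
  (forall n, buc (h n)) -> buc (fun th => fsum Rplus 0 N (fun n => h n th)).
Proof.
  intros H. induction N as [|N IH].
  - exact (buc_const 0).
  - apply buc_plus; auto.
Qed.

Lemma buc_comp (phi : R -> R) f a b : a <= b -> (forall th, a <= f th <= b) -> unif_cont f ->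
  (forall x, a <= x <= b -> continuity_pt phi x) -> buc (fun th => phi (f th)).
Proof.
  intros Hab Hr Uf Hc. split.
  - destruct (continuity_ab_maj phi a b Hab Hc) as [xM [HM _]].
    destruct (continuity_ab_min phi a b Hab Hc) as [xm [Hm _]].
    exists (Rabs (phi xM) + Rabs (phi xm)). intros th.
    specialize (HM (f th) (Hr th)). specialize (Hm (f th) (Hr th)).
    apply Rabs_le. generalize (Rle_abs (phi xM)) (Rle_abs (- phi xm)). rewrite Rabs_Ropp.
    generalize (Rabs_pos (phi xM)) (Rabs_pos (phi xm)). lra.
  - intros eps He. destruct (Heine_cor2 Hc (mkposreal eps He)) as [[d Hd] Hh]. simpl in Hh.
    destruct (Uf d Hd) as [d' [Hd' K]]. exists d'. split; auto.
Qed.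

Lemma buc_comp_nonneg (phi : R -> R) f : buc f -> (forall th, 0 <= f th) ->
  (forall x, 0 <= x -> continuity_pt phi x) -> buc (fun th => phi (f th)).
Proof.
  intros Hf Hp Hc. destruct (buc_bound f Hf) as [B [HB0 HB]].
  apply (buc_comp phi f 0 B); auto; [|apply Hf|intros; apply Hc; lra].
  intros th. specialize (HB th). apply Rabs_le_between in HB. specialize (Hp th). lra.
Qed.

Lemma buc_sqrt f : buc f -> (forall th, 0 <= f th) -> buc (fun th => sqrt (f th)).
Proof. intros Hf Hp. apply buc_comp_nonneg; auto. intros; apply continuity_pt_sqrt; auto. Qed.

Lemma buc_rpow f q : 0 < q -> buc f -> (forall th, 0 <= f th) -> buc (fun th => rpow (f th) q).
Proof.
  intros Hq Hf Hp. apply (buc_comp_nonneg (fun x => rpow x q)); auto.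
  intros; apply rpow_continuity_pt; auto.
Qed.

Lemma buc_angle (phi : R -> R) c : (forall x, Rabs (phi x) <= 1) ->
  (forall x y, Rabs (phi x - phi y) <= Rabs (x - y)) -> buc (fun th => phi (th c)).
Proof.
  intros Hb Hl. split; [exists 1; auto|].
  intros eps He. exists eps. split; auto. intros th th' Hth.
  eapply Rle_lt_trans; [apply Hl | apply Hth].
Qed.

Lemma trig_lipschitz (phi dphi : R -> R) : (forall x, derivable_pt_lim phi x (dphi x)) ->
  (forall x, Rabs (dphi x) <= 1) -> forall x y, Rabs (phi x - phi y) <= Rabs (x - y).
Proof.
  intros Hd Hb x y. destruct (MVT_abs phi dphi y x) as [z [Hz _]]; [intros; apply Hd|].
  rewrite Hz. rewrite <- (Rmult_1_l (Rabs (x - y))) at 2.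
  apply Rmult_le_compat_r; [apply Rabs_pos | apply Hb].
Qed.

Lemma cbuc_const c : cbuc (fun _ => c).
Proof. split; apply buc_const. Qed.

Lemma cbuc_plus f g : cbuc f -> cbuc g -> cbuc (fun th => f th + g th)%C.
Proof. intros [A B] [C0 D]. split; simpl; apply buc_plus; auto. Qed.

Lemma cbuc_mult f g : cbuc f -> cbuc g -> cbuc (fun th => f th * g th)%C.
Proof.
  intros [A B] [C0 D]. split; simpl.
  - apply buc_minus; apply buc_mult; auto.
  - apply buc_plus; apply buc_mult; auto.
Qed.

Lemma cbuc_fsum N (g : nat -> (nat -> R) -> C) :
  (forall n, cbuc (g n)) -> cbuc (fun th => fsum Cplus 0%C N (fun n => g n th)).
Proof.
  intros H. induction N as [|N IH].
  - exact (cbuc_const 0%C).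
  - apply cbuc_plus; auto.
Qed.

Lemma cbuc_cis c : cbuc (fun th => cis (th c)).
Proof.
  split; simpl; apply buc_angle.
  - intros; apply Rabs_le, COS_bound.
  - apply (trig_lipschitz cos (fun x => - sin x)); [apply derivable_pt_lim_cos|].
    intros; rewrite Rabs_Ropp; apply Rabs_le, SIN_bound.
  - intros; apply Rabs_le, SIN_bound.
  - apply (trig_lipschitz sin cos); [apply derivable_pt_lim_sin|]. intros; apply Rabs_le, COS_bound.
Qed.

Lemma buc_Cmod g : cbuc g -> buc (fun th => Cmod (g th)).
Proof.
  intros [A B]. unfold Cmod. apply buc_sqrt.
  - apply buc_plus; apply buc_pow; auto.
  - intros. apply Rplus_le_le_0_compat; apply pow2_ge_0.
Qed.

Definition upd_angle (th : nat -> R) (n : nat) (t : R) : nat -> R :=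
  fun l => if Nat.eqb l n then t else th l.

(* [mean M o f th] averages [f] over the angles [o, ..., o + M - 1], the other angles being taken
   from [th]; as in [steinE], the angle with the largest index is integrated outermost. *)
Fixpoint mean (M o : nat) (f : (nat -> R) -> R) (th : nat -> R) : R :=
  match M with
  | O => f th
  | S M' => circle_mean (fun t => mean M' o f (upd_angle th (o + M') t))
  end.

Lemma upd_angle_dist th th' n t l : Rabs (upd_angle th n t l - upd_angle th' n t l) <= Rabs (th l - th' l).
Proof.
  unfold upd_angle. destruct (Nat.eqb l n); [|lra].
  rewrite Rminus_eq_0, Rabs_R0. apply Rabs_pos.
Qed.

Lemma upd_angle_comm th a b s t : a <> b ->
  upd_angle (upd_angle th a s) b t = upd_angle (upd_angle th b t) a s.
Proof.
  intros Hab. extensionality l. unfold upd_angle.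
  destruct (Nat.eqb_spec l b), (Nat.eqb_spec l a); auto. lia.
Qed.

Lemma unif_cont_upd_angle f th n t0 : unif_cont f -> continuous (fun t => f (upd_angle th n t)) t0.
Proof.
  intros H. apply continuity_pt_filterlim.
  intros eps Heps. destruct (H eps Heps) as [d [Hd H2]].
  exists d. split; auto. intros t [_ Ht]. simpl in *. unfold R_dist in *.
  apply H2. intro l. unfold upd_angle. destruct (Nat.eqb l n); [exact Ht|].
  rewrite Rminus_eq_0, Rabs_R0; lra.
Qed.

Lemma mean_buc M o f : buc f -> buc (mean M o f).
Proof.
  intros Hf. induction M as [|M IH]; [exact Hf|].
  assert (Hc : forall th t, continuous (fun t => mean M o f (upd_angle th (o + M) t)) t)
    by (intros; apply unif_cont_upd_angle, IH).
  destruct (buc_bound _ IH) as [B [_ HB]]. split.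
  - exists B. intros th. simpl. rewrite <- (Rminus_0_r (circle_mean _)), <- (circle_mean_const 0).
    apply circle_mean_dist; auto; [intros; apply continuous_const|].
    intros t. rewrite Rminus_0_r. apply HB.
  - intros eps He. destruct IH as [_ U]. destruct (U (eps / 2)) as [d [Hd Hu]]; [lra|].
    exists d. split; auto. intros th th' Hth. simpl.
    apply Rle_lt_trans with (eps / 2); [|lra].
    apply circle_mean_dist; auto. intros t. left. apply Hu.
    intros l. eapply Rle_lt_trans; [apply upd_angle_dist | apply Hth].
Qed.

Section MeanLinear.

Variables (o : nat) (f g : (nat -> R) -> R).
Hypotheses (Hf : buc f) (Hg : buc g).

Let cont_step M h th : buc h -> forall t, continuous (fun t => mean M o h (upd_angle th (o + M) t)) t.
Proof. intros Hh t. apply unif_cont_upd_angle, mean_buc, Hh. Qed.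

Lemma mean_plus M th : mean M o (fun x => f x + g x) th = mean M o f th + mean M o g th.
Proof.
  revert th. induction M as [|M IH]; intros th; [reflexivity|]. simpl.
  rewrite <- circle_mean_plus by (apply cont_step; auto).
  apply circle_mean_ext. intros t. apply IH.
Qed.

Lemma mean_scal M c th : mean M o (fun x => c * f x) th = c * mean M o f th.
Proof.
  revert th. induction M as [|M IH]; intros th; [reflexivity|]. simpl.
  rewrite <- circle_mean_scal by (apply cont_step; auto).
  apply circle_mean_ext. intros t. apply IH.
Qed.

Lemma mean_le M th : (forall x, f x <= g x) -> mean M o f th <= mean M o g th.
Proof.
  intros Hle. revert th. induction M as [|M IH]; intros th; [apply Hle|]. simpl.
  apply circle_mean_le; try (apply cont_step; auto). intros t. apply IH.
Qed.

End MeanLinear.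

Lemma mean_const M o c th : mean M o (fun _ => c) th = c.
Proof.
  revert th. induction M as [|M IH]; intros th; [reflexivity|]. simpl.
  rewrite (circle_mean_ext _ (fun _ => c)) by auto. apply circle_mean_const.
Qed.

Lemma mean_ge0 M o f th : buc f -> (forall x, 0 <= f x) -> 0 <= mean M o f th.
Proof. intros Hf H. rewrite <- (mean_const M o 0 th). apply mean_le; auto using buc_const. Qed.

Lemma mean_fsum M o N (h : nat -> (nat -> R) -> R) th : (forall n, buc (h n)) ->
  mean M o (fun x => fsum Rplus 0 N (fun n => h n x)) th = fsum Rplus 0 N (fun n => mean M o (h n) th).
Proof.
  intros H. induction N as [|N IH]; simpl.
  - apply mean_const.
  - rewrite mean_plus, IH; auto. apply buc_fsum; auto.
Qed.

Lemma mean_ext M o f g th : (forall x, f x = g x) -> mean M o f th = mean M o g th.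
Proof. intros H. replace g with f; auto. extensionality x; auto. Qed.

Lemma mean_ext_out M : forall o f g th0,
  (forall th, (forall l, (l < o \/ o + M <= l)%nat -> th l = th0 l) -> f th = g th) ->
  mean M o f th0 = mean M o g th0.
Proof.
  induction M as [|M IH]; intros o f g th0 H; simpl; [apply H; auto|].
  apply circle_mean_ext. intros t. apply IH.
  intros th Hth. apply H. intros l Hl. rewrite Hth by lia. unfold upd_angle.
  destruct (Nat.eqb_spec l (o + M)); auto. lia.
Qed.

Lemma mean_upd_out M : forall o c t f th0, (c < o \/ o + M <= c)%nat ->
  mean M o (fun th => f (upd_angle th c t)) th0 = mean M o f (upd_angle th0 c t).
Proof.
  induction M as [|M IH]; intros o c t f th0 Hc; [reflexivity|]. simpl.
  apply circle_mean_ext. intros s. rewrite IH by lia. rewrite upd_angle_comm by lia. reflexivity.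
Qed.

Lemma steinE_mean n f : steinE n f = mean n 0 f (fun _ => 0).
Proof.
  revert f. induction n as [|n IH]; intros f; [reflexivity|]. simpl.
  apply circle_mean_ext. intros t. rewrite IH. apply (mean_upd_out n 0 n t f). lia.
Qed.

Lemma mean_split M M' : forall o f th, mean (M + M') o f th = mean M' (o + M) (mean M o f) th.
Proof.
  induction M' as [|M' IH]; intros o f th.
  - rewrite Nat.add_0_r. reflexivity.
  - rewrite Nat.add_succ_r. simpl. apply circle_mean_ext. intros t. rewrite IH, Nat.add_assoc. reflexivity.
Qed.

Lemma mean_succ_inner N o f th :
  mean (S N) o f th = mean N (S o) (fun th' => circle_mean (fun t => f (upd_angle th' o t))) th.
Proof.
  change (S N) with (1 + N)%nat. rewrite mean_split, Nat.add_1_r. simpl.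
  rewrite Nat.add_0_r. reflexivity.
Qed.

(** * Khinchin's inequality for Steinhaus sums *)

Definition stein_lin (c : nat -> C) (o N : nat) (th : nat -> R) : C :=
  fsum Cplus 0%C N (fun n => c n * cis (th (o + n)%nat))%C.

Lemma cbuc_stein_lin c o N : cbuc (stein_lin c o N).
Proof. apply cbuc_fsum. intros n. apply cbuc_mult; [apply cbuc_const | apply cbuc_cis]. Qed.

Lemma buc_Cmod_stein_lin c o N k : buc (fun th => Cmod (stein_lin c o N th) ^ k).
Proof. apply buc_pow, buc_Cmod, cbuc_stein_lin. Qed.

Lemma stein_lin_succ_upd c o N th t :
  stein_lin c o (S N) (upd_angle th o t) = (stein_lin (fun n => c (S n)) (S o) N th + c O * cis t)%C.
Proof.
  unfold stein_lin. rewrite fsum_succ_l by (intros; ring). rewrite Cplus_comm. f_equal.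
  - apply fsum_ext. intros n. unfold upd_angle.
    replace (Nat.eqb (o + S n) o) with false by (symmetry; apply Nat.eqb_neq; lia).
    rewrite Nat.add_succ_r. reflexivity.
  - unfold upd_angle. rewrite Nat.add_0_r, Nat.eqb_refl. reflexivity.
Qed.

Lemma mean_stein_lin_succ N o c (phi : C -> R) th :
  mean (S N) o (fun th => phi (stein_lin c o (S N) th)) th
  = mean N (S o) (fun th =>
      circle_mean (fun t => phi (stein_lin (fun n => c (S n)) (S o) N th + c O * cis t)%C)) th.
Proof.
  rewrite mean_succ_inner. apply mean_ext. intros th'.
  apply circle_mean_ext. intros t. rewrite stein_lin_succ_upd. reflexivity.
Qed.

Lemma mean_stein_lin_Cmod2 N : forall o c th,
  mean N o (fun th => Cmod (stein_lin c o N th) ^ 2) th = fsum Rplus 0 N (fun n => Cmod (c n) ^ 2).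
Proof.
  induction N as [|N IH]; intros o c th.
  - simpl. unfold stein_lin. simpl. rewrite Cmod_0. ring.
  - rewrite (mean_stein_lin_succ N o c (fun z => Cmod z ^ 2)).
    rewrite (mean_ext _ _ _ (fun th => Cmod (stein_lin (fun n => c (S n)) (S o) N th) ^ 2 + Cmod (c O) ^ 2))
      by (intros; apply circle_mean_Cmod2_shift).
    rewrite mean_plus, mean_const, IH, fsum_Rplus_succ_l by auto using buc_const, buc_Cmod_stein_lin.
    ring.
Qed.

Lemma mean_stein_lin_Cmod4 N : forall o c th,
  mean N o (fun th => Cmod (stein_lin c o N th) ^ 4) th <= 2 * fsum Rplus 0 N (fun n => Cmod (c n) ^ 2) ^ 2.
Proof.
  induction N as [|N IH]; intros o c th.
  - simpl. unfold stein_lin. simpl. rewrite Cmod_0. lra.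
  - set (c' := fun n => c (S n)). set (rho := Cmod (c O) ^ 2).
    set (m2 := fsum Rplus 0 N (fun n => Cmod (c' n) ^ 2)).
    rewrite (mean_stein_lin_succ N o c (fun z => Cmod z ^ 4)). fold c'.
    rewrite (mean_ext _ _ _ (fun th => Cmod (stein_lin c' (S o) N th) ^ 4
               + (4 * rho) * Cmod (stein_lin c' (S o) N th) ^ 2 + rho ^ 2))
      by (intros; rewrite circle_mean_Cmod4_shift; unfold rho; ring).
    rewrite !mean_plus, mean_scal, mean_const, mean_stein_lin_Cmod2, fsum_Rplus_succ_l
      by auto using buc_plus, buc_scal, buc_const, buc_Cmod_stein_lin.
    fold c' rho m2. specialize (IH (S o) c' th). fold m2 in IH.
    assert (0 <= rho) by apply pow2_ge_0.
    assert (0 <= m2) by (apply fsum_nonneg; intros; apply pow2_ge_0).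
    change (fsum Rplus 0 N (fun n => Cmod (c (S n)) ^ 2)) with m2. nra.
Qed.

(* The tangent trick behind [||f||_2 ^ 3 <= ||f||_1 * ||f||_4 ^ 2]: [z (z - a)^2 (z + 2a) >= 0]. *)
Lemma pow2_le_pow1_pow4 a z : 0 < a -> 0 <= z -> z ^ 2 <= 2 * a / 3 * z + / (3 * a ^ 2) * z ^ 4.
Proof.
  intros Ha Hz.
  assert (H : 0 <= z * (z - a) ^ 2 * (z + 2 * a))
    by (apply Rmult_le_pos; [apply Rmult_le_pos; [auto | apply pow2_ge_0] | lra]).
  apply Rmult_le_reg_l with (3 * a ^ 2); [nra|].
  replace (3 * a ^ 2 * (2 * a / 3 * z + / (3 * a ^ 2) * z ^ 4)) with (2 * a ^ 3 * z + z ^ 4) by (field; lra).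
  replace (z * (z - a) ^ 2 * (z + 2 * a)) with (z ^ 4 - 3 * a ^ 2 * z ^ 2 + 2 * a ^ 3 * z) in H by ring.
  lra.
Qed.

Lemma stein_lin_khinchin N o c th :
  sqrt (fsum Rplus 0 N (fun n => Cmod (c n) ^ 2))
  <= sqrt 2 * mean N o (fun th => Cmod (stein_lin c o N th)) th.
Proof.
  set (m2 := fsum Rplus 0 N (fun n => Cmod (c n) ^ 2)).
  set (F := fun th => Cmod (stein_lin c o N th)).
  assert (GF : buc F) by apply buc_Cmod, cbuc_stein_lin.
  assert (M1 : 0 <= mean N o F th) by (apply mean_ge0; auto; intros; apply Cmod_ge_0).
  assert (M2 := mean_stein_lin_Cmod2 N o c th). assert (M4 := mean_stein_lin_Cmod4 N o c th).
  fold m2 F in M2, M4.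
  destruct (fsum_nonneg N (fun n => Cmod (c n) ^ 2) (fun n => pow2_ge_0 _)) as [Hm2|Hm2];
    fold m2 in Hm2.
  2:{ rewrite <- Hm2, sqrt_0. apply Rmult_le_pos; [apply sqrt_pos | auto]. }
  set (a := sqrt 2 * sqrt m2).
  assert (Ha2 : a ^ 2 = 2 * m2) by (unfold a; rewrite Rpow_mult_distr, !pow2_sqrt; lra).
  assert (Ha : 0 < a) by (apply Rmult_lt_0_compat; apply sqrt_lt_R0; lra).
  assert (HE : m2 <= 2 * a / 3 * mean N o F th + / (3 * a ^ 2) * mean N o (fun th => F th ^ 4) th).
  { rewrite <- M2, <- !mean_scal, <- mean_plus by auto using buc_pow, buc_scal.
    apply mean_le; auto using buc_pow, buc_plus, buc_scal.
    intros x. apply pow2_le_pow1_pow4; auto. apply Cmod_ge_0. }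
  assert (/ (3 * a ^ 2) * mean N o (fun th => F th ^ 4) th <= m2 / 3).
  { apply Rle_trans with (/ (3 * a ^ 2) * (2 * m2 ^ 2)).
    - apply Rmult_le_compat_l; auto. left; apply Rinv_0_lt_compat; nra.
    - rewrite Ha2. right; field; lra. }
  assert (Hs : sqrt m2 * sqrt m2 = m2) by (apply sqrt_sqrt; lra).
  assert (0 < sqrt m2) by (apply sqrt_lt_R0; lra).
  assert (m2 <= a * mean N o F th) by lra.
  apply Rmult_le_reg_r with (sqrt m2); auto. rewrite Hs.
  replace (sqrt 2 * mean N o F th * sqrt m2) with (a * mean N o F th) by (unfold a; ring). auto.
Qed.

Definition ncons (n : nat) (i : nat -> nat) : nat -> nat :=
  fun j => match j with O => n | S j' => i j' end.

Lemma msum_succ {A : Type} (plus : A -> A -> A) z k N f :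
  msum plus z (S k) N f = fsum plus z N (fun n => msum plus z k N (fun i => f (ncons n i))).
Proof. reflexivity. Qed.

(* [steinSum] with the block of angles shifted to start at [o]: the variable [eps^(j)_n] is
   [cis (th (o + j * N + n))]. *)
Definition stein_multi (k N o : nat) (a : (nat -> nat) -> C) (th : nat -> R) : C :=
  msum Cplus 0%C k N (fun i => a i * fsum Cmult 1%C k (fun j => cis (th (o + j * N + i j)%nat)))%C.

Lemma steinSum_stein_multi k N a : steinSum k N a = stein_multi k N 0 a.
Proof. reflexivity. Qed.

Lemma stein_multi_0 N o a th : stein_multi 0 N o a th = a (fun _ => O).
Proof. unfold stein_multi. simpl. ring. Qed.

Lemma stein_multi_succ k N o a th : stein_multi (S k) N o a th =
  fsum Cplus 0%C N (fun n => cis (th (o + n)%nat) * stein_multi k N (o + N) (fun i => a (ncons n i)) th)%C.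
Proof.
  unfold stein_multi. rewrite msum_succ. apply fsum_ext. intros n. rewrite <- msum_Cscal.
  apply msum_ext. intros i. rewrite fsum_Cmult_succ_l.
  replace (o + 0 * N + ncons n i 0)%nat with (o + n)%nat by (simpl; lia).
  replace (fun j => cis (th (o + S j * N + ncons n i (S j))%nat))
    with (fun j => cis (th (o + N + j * N + i j)%nat)) by (extensionality j; simpl; do 3 f_equal; lia).
  ring.
Qed.

Lemma stein_multi_local k : forall N o a th th',
  (forall l, (o <= l < o + k * N)%nat -> th l = th' l) -> stein_multi k N o a th = stein_multi k N o a th'.
Proof.
  induction k as [|k IH]; intros N o a th th' H.
  - rewrite !stein_multi_0. auto.
  - rewrite !stein_multi_succ. apply fsum_ext_lt. intros n Hn. f_equal.
    + rewrite (H (o + n)%nat); auto. simpl; lia.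
    + apply IH. intros l Hl. apply H. simpl; lia.
Qed.

Lemma cbuc_stein_multi k : forall N o a, cbuc (stein_multi k N o a).
Proof.
  induction k as [|k IH]; intros N o a.
  - replace (stein_multi 0 N o a) with (fun _ : nat -> R => a (fun _ => O)) by
      (extensionality th; rewrite stein_multi_0; auto).
    apply cbuc_const.
  - replace (stein_multi (S k) N o a) with (fun th => fsum Cplus 0%C N
        (fun n => cis (th (o + n)%nat) * stein_multi k N (o + N) (fun i => a (ncons n i)) th)%C)
      by (extensionality th; rewrite stein_multi_succ; auto).
    apply cbuc_fsum. intros n. apply cbuc_mult; [apply cbuc_cis | apply IH].
Qed.

Lemma buc_rpow_Cmod_stein_multi k N o a q : 0 < q -> buc (fun th => rpow (Cmod (stein_multi k N o a th)) q).
Proof. intros Hq. apply buc_rpow; [auto | apply buc_Cmod, cbuc_stein_multi | intros; apply Cmod_ge_0]. Qed.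

(* Minkowski's inequality for the [l_2]-valued function [x |-> (h_n x)_n]. *)
Lemma mean_l2_le M o N (h : nat -> (nat -> R) -> R) th :
  (forall n, buc (h n)) -> (forall n x, 0 <= h n x) ->
  sqrt (fsum Rplus 0 N (fun n => mean M o (h n) th ^ 2))
  <= mean M o (fun x => sqrt (fsum Rplus 0 N (fun n => h n x ^ 2))) th.
Proof.
  intros G P.
  assert (GS : buc (fun x => sqrt (fsum Rplus 0 N (fun n => h n x ^ 2)))).
  { apply buc_sqrt; [apply buc_fsum; intros; apply buc_pow; auto|].
    intros; apply fsum_nonneg; intros; apply pow2_ge_0. }
  set (S := sqrt (fsum Rplus 0 N (fun n => mean M o (h n) th ^ 2))).
  assert (HS : S * S = fsum Rplus 0 N (fun n => mean M o (h n) th ^ 2))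
    by (apply sqrt_sqrt, fsum_nonneg; intros; apply pow2_ge_0).
  assert (S0 : 0 <= S) by apply sqrt_pos. destruct S0 as [Sp|Sz].
  2:{ rewrite <- Sz. apply mean_ge0; auto. intros; apply sqrt_pos. }
  (* test the vector [(h_n x)_n] against the unit vector [(E h_n)_n / S] *)
  assert (HE : mean M o (fun x => fsum Rplus 0 N (fun n => mean M o (h n) th * h n x)) th
               <= mean M o (fun x => S * sqrt (fsum Rplus 0 N (fun n => h n x ^ 2))) th).
  { apply mean_le; [apply buc_fsum; intros; apply buc_scal; auto | apply buc_scal; auto |].
    intros x. apply fsum_cauchy_schwarz. }
  rewrite mean_fsum, mean_scal in HE by (auto; intros; apply buc_scal; auto).
  rewrite (fsum_ext _ _ _ _ (fun n => mean M o (h n) th ^ 2)) in HE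
    by (intros n; rewrite mean_scal by auto; ring).
  rewrite <- HS in HE. apply Rmult_le_reg_l with S; auto.
Qed.

Lemma stein_multi_succ_lin k N o a th th' :
  (forall l, (l < o \/ o + N <= l)%nat -> th' l = th l) ->
  stein_multi (S k) N o a th'
  = stein_lin (fun n => stein_multi k N (o + N) (fun i => a (ncons n i)) th) o N th'.
Proof.
  intros Hout. rewrite stein_multi_succ. unfold stein_lin. apply fsum_ext_lt. intros n Hn.
  rewrite Cmult_comm. f_equal. apply stein_multi_local. intros l Hl. apply Hout. lia.
Qed.

Lemma mean_stein_multi_succ_ge k N o a th :
  / sqrt 2 * sqrt (fsum Rplus 0 N (fun n => Cmod (stein_multi k N (o + N) (fun i => a (ncons n i)) th) ^ 2))
  <= mean N o (fun th' => Cmod (stein_multi (S k) N o a th')) th.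
Proof.
  rewrite (mean_ext_out N o _ (fun th' =>
     Cmod (stein_lin (fun n => stein_multi k N (o + N) (fun i => a (ncons n i)) th) o N th')))
    by (intros th' Hth'; rewrite (stein_multi_succ_lin k N o a th th'); auto).
  assert (s2 : 0 < sqrt 2) by (apply sqrt_lt_R0; lra).
  apply Rmult_le_reg_l with (sqrt 2); auto. rewrite <- Rmult_assoc, Rinv_r, Rmult_1_l by lra.
  apply stein_lin_khinchin.
Qed.

Lemma stein_multi_khinchin k : forall N o a th,
  (/ sqrt 2) ^ k * sqrt (msum Rplus 0 k N (fun i => Cmod (a i) ^ 2))
  <= mean (k * N) o (fun th => Cmod (stein_multi k N o a th)) th.
Proof.
  assert (c0 : 0 < / sqrt 2) by (apply Rinv_0_lt_compat, sqrt_lt_R0; lra).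
  induction k as [|k IH]; intros N o a th.
  - rewrite pow_O, Rmult_1_l. cbn [msum mean Nat.mul].
    rewrite stein_multi_0, sqrt_pow2 by apply Cmod_ge_0. lra.
  - change (S k * N)%nat with (N + k * N)%nat. rewrite mean_split.
    set (B := fun n th => Cmod (stein_multi k N (o + N) (fun i => a (ncons n i)) th)).
    assert (GB : forall n, buc (B n)) by (intros; apply buc_Cmod, cbuc_stein_multi).
    set (G := fun th => sqrt (fsum Rplus 0 N (fun n => B n th ^ 2))).
    assert (GG : buc G).
    { apply buc_sqrt; [apply buc_fsum; intros; apply buc_pow; auto|].
      intros; apply fsum_nonneg; intros; apply pow2_ge_0. }
    apply Rle_trans with (mean (k * N) (o + N) (fun th => / sqrt 2 * G th) th).
    2:{ apply mean_le; [apply buc_scal; auto | apply mean_buc, buc_Cmod, cbuc_stein_multi |].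
        intros th'. apply mean_stein_multi_succ_ge. }
    rewrite mean_scal by auto.
    rewrite <- tech_pow_Rmult, Rmult_assoc. apply Rmult_le_compat_l; [lra|].
    eapply Rle_trans; [|apply mean_l2_le; auto; intros; apply Cmod_ge_0].
    rewrite msum_succ, <- (sqrt_pow2 ((/ sqrt 2) ^ k)) by (apply pow_le; lra).
    rewrite <- sqrt_mult by (try apply pow2_ge_0; apply fsum_nonneg; intros; apply msum_nonneg;
                             intros; apply pow2_ge_0).
    apply sqrt_le_1_alt. rewrite <- fsum_scal. apply fsum_le. intros n.
    rewrite <- (pow2_sqrt (msum Rplus 0 k N _)) by (apply msum_nonneg; intros; apply pow2_ge_0).
    rewrite <- Rpow_mult_distr. apply pow_incr. split.
    + apply Rmult_le_pos; [apply pow_le; lra | apply sqrt_pos].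
    + apply IH.
Qed.

(** * From the first moment to the [q]-th moment *)

Lemma Rpower_ge1 c e : 1 <= c -> 0 <= e -> 1 <= Rpower c e.
Proof. intros Hc He. rewrite <- (Rpower_O c) at 1 by lra. apply Rle_Rpower; auto. Qed.

Lemma Rpower_le1 c e : 0 < c <= 1 -> 0 <= e -> Rpower c e <= 1.
Proof.
  intros Hc He. rewrite <- (rpow_base1 e), rpow_Rpower by lra. apply Rle_Rpower_l; auto.
Qed.

Lemma bernoulli_rpow q y : 1 <= q -> 0 <= y -> 1 + q * (y - 1) <= rpow y q.
Proof.
  intros Hq [Hy|Hy]; [|subst; rewrite rpow_0; lra].
  rewrite rpow_Rpower by auto.
  set (h := fun x => Rpower x q - q * x).
  assert (Hd : forall c, 0 < c -> derivable_pt_lim h c (q * Rpower c (q - 1) - q)).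
  { intros c Hc. unfold h. apply derivable_pt_lim_minus; [apply derivable_pt_lim_power; auto|].
    replace q with (q * 1) at 2 by ring. apply derivable_pt_lim_scal, derivable_pt_lim_id. }
  assert (h1 : h 1 = 1 - q) by (unfold h, Rpower; rewrite ln_1, Rmult_0_r, exp_0; ring).
  enough (h 1 <= h y) by (unfold h in *; lra).
  destruct (Rtotal_order y 1) as [Hlt|[->|Hgt]]; [| lra |].
  - destruct (MVT_cor2 h (fun c => q * Rpower c (q - 1) - q) y 1 Hlt) as [c [Hc Hcr]];
      [intros c Hc; apply Hd; lra|].
    assert (Rpower c (q - 1) <= 1) by (apply Rpower_le1; lra).
    assert (q * Rpower c (q - 1) - q <= 0) by nra. nra.
  - destruct (MVT_cor2 h (fun c => q * Rpower c (q - 1) - q) 1 y Hgt) as [c [Hc Hcr]];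
      [intros c Hc; apply Hd; lra|].
    assert (1 <= Rpower c (q - 1)) by (apply Rpower_ge1; lra).
    assert (0 <= q * Rpower c (q - 1) - q) by nra. nra.
Qed.

(* Bernoulli at [x / l]: the tangent line at [l] of the convex function [x |-> x ^ q]. *)
Lemma le_rpow_tangent q x l : 1 <= q -> 0 <= x -> 0 < l ->
  x <= l * (1 - / q) + / q * (l * / rpow l q) * rpow x q.
Proof.
  intros Hq Hx Hl.
  assert (Hlq : 0 < rpow l q) by (apply rpow_gt0; auto).
  assert (HB := bernoulli_rpow q (x * / l) Hq
                 ltac:(apply Rmult_le_pos; [|apply Rlt_le, Rinv_0_lt_compat]; auto)).
  rewrite rpow_mult_distr, rpow_inv in HB by (try apply Rlt_le, Rinv_0_lt_compat; auto).
  apply Rmult_le_compat_l with (r := l / q) in HB; [|apply Rdiv_le_0_compat; lra].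
  replace (l / q * (1 + q * (x * / l - 1))) with (x - l * (1 - / q)) in HB by (field; lra).
  replace (l / q * (rpow x q * / rpow l q)) with (/ q * (l * / rpow l q) * rpow x q) in HB
    by (field; lra).
  lra.
Qed.

Lemma mean_le_rpow_mean M o f th q : 1 <= q -> buc f -> (forall x, 0 <= f x) ->
  mean M o f th <= rpow (mean M o (fun x => rpow (f x) q) th) (/ q).
Proof.
  intros Hq Gf Pf.
  assert (Gq : buc (fun x => rpow (f x) q)) by (apply buc_rpow; auto; lra).
  set (Mq := mean M o (fun x => rpow (f x) q) th).
  assert (HY : forall l, 0 < l -> mean M o f th <= l * (1 - / q) + / q * (l * / rpow l q) * Mq).
  { intros l Hl. rewrite <- (mean_const M o (l * (1 - / q)) th). unfold Mq.
    rewrite <- mean_scal, <- mean_plus by auto using buc_const, buc_scal.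
    apply mean_le; auto using buc_plus, buc_const, buc_scal.
    intros x. apply le_rpow_tangent; auto. }
  assert (Mq0 : 0 <= Mq) by (apply mean_ge0; auto; intros; apply rpow_ge0).
  destruct Mq0 as [Mqp|Mqz].
  - set (l := rpow Mq (/ q)).
    assert (Hl : rpow l q = Mq) by (apply rpow_inv_l; lra).
    specialize (HY l (rpow_gt0 _ _ Mqp)). rewrite Hl in HY.
    replace (l * (1 - / q) + / q * (l * / Mq) * Mq) with l in HY by (field; lra). exact HY.
  - rewrite <- Mqz, rpow_0. apply Rnot_lt_le. intros Hpos.
    specialize (HY (mean M o f th / 2) ltac:(lra)). rewrite <- Mqz in HY.
    assert (/ q <= 1) by (rewrite <- Rinv_1; apply Rinv_le_contravar; lra).
    assert (0 < / q) by (apply Rinv_0_lt_compat; lra).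
    nra.
Qed.

Lemma khinchin_ok_inv_sqrt2_pow k q : 1 <= q -> khinchin_ok k q ((/ sqrt 2) ^ k).
Proof.
  intros Hq N a. rewrite steinE_mean, steinSum_stein_multi.
  eapply Rle_trans; [apply (stein_multi_khinchin k N 0 a)|].
  apply mean_le_rpow_mean; auto; [apply buc_Cmod, cbuc_stein_multi | intros; apply Cmod_ge_0].
Qed.

Lemma Cmod_cis t : Cmod (cis t) = 1.
Proof.
  unfold Cmod, cis. simpl. rewrite !Rmult_1_r, <- !Rsqr_def, Rplus_comm, sin2_cos2. apply sqrt_1.
Qed.

Lemma Cmod_stein_multi_ones k : forall o th, Cmod (stein_multi k 1 o (fun _ => 1%C) th) = 1.
Proof.
  induction k as [|k IH]; intros o th.
  - rewrite stein_multi_0. apply Cmod_1.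
  - rewrite stein_multi_succ. simpl. rewrite Cplus_0_l, Cmod_mult, IH, Cmod_cis. ring.
Qed.

Lemma khinchin_ok_le_1 k q c : khinchin_ok k q c -> c <= 1.
Proof.
  intros H. specialize (H 1%nat (fun _ => 1%C)).
  assert (Hsum : forall j, msum Rplus 0 j 1 (fun _ => 1) = 1).
  { intros j. induction j as [|j IH]; simpl; [ring|]. rewrite IH. ring. }
  rewrite (msum_ext _ _ _ _ _ (fun _ => 1)), Hsum, sqrt_1 in H by (intros; rewrite Cmod_1; ring).
  rewrite steinE_mean, steinSum_stein_multi in H.
  rewrite (mean_ext _ _ _ (fun _ => 1)) in H
    by (intros; rewrite Cmod_stein_multi_ones; apply rpow_base1).
  rewrite mean_const, rpow_base1 in H. lra.
Qed.

Definition fin_supp (N : nat) (v : nat -> C) : Prop := forall l, (N <= l)%nat -> v l = 0%C.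

Lemma is_series_fin_supp (u : nat -> R) N :
  (forall l, (N <= l)%nat -> u l = 0) -> is_series u (fsum Rplus 0 N u).
Proof.
  intros H. apply (filterlim_ext_loc (fun _ => fsum Rplus 0 N u)); [|apply filterlim_const].
  exists N. intros n Hn.
  assert (E : forall n, sum_n u n = fsum Rplus 0 (S n) u).
  { induction n0 as [|n0 IH]; [rewrite sum_O; simpl; unfold plus; simpl; ring|].
    rewrite sum_Sn, IH. reflexivity. }
  rewrite E. clear E. induction Hn.
  - simpl. rewrite (H N) by lia. ring.
  - change (fsum Rplus 0 (S (S m)) u) with (fsum Rplus 0 (S m) u + u (S m)).
    rewrite H by lia. rewrite IHHn. ring.
Qed.

Lemma inX_fin_supp P v N : fin_supp N v -> inX P v.
Proof.
  intros H. destruct P as [r| |]; simpl.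
  - exists (fsum Rplus 0 N (fun n => rpow (Cmod (v n)) r)). apply is_series_fin_supp.
    intros l Hl. rewrite H, Cmod_0 by auto. apply rpow_0.
  - apply (is_lim_seq_ext_loc (fun _ => 0)); [|apply is_lim_seq_const].
    exists N. intros n Hn. rewrite H, Cmod_0 by auto. auto.
  - apply (is_lim_seq_ext_loc (fun _ => 0)); [|apply is_lim_seq_const].
    exists N. intros n Hn. rewrite H, Cmod_0 by auto. auto.
Qed.

Lemma normX_fin_supp r v N : fin_supp N v ->
  normX (Finite r) v = rpow (fsum Rplus 0 N (fun n => rpow (Cmod (v n)) r)) (/ r).
Proof.
  intros H. simpl. f_equal. apply is_series_unique, is_series_fin_supp.
  intros l Hl. rewrite H, Cmod_0 by auto. apply rpow_0.
Qed.

Lemma inX_unitv P i : inX P (unitv i).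
Proof.
  apply (inX_fin_supp P _ (S i)). intros l Hl. unfold unitv.
  destruct (Nat.eqb_spec l i); [lia | auto].
Qed.

Definition finvec (N : nat) (d : nat -> C) : nat -> C :=
  fun l => fsum Cplus 0%C N (fun n => d n * unitv n l)%C.

Lemma finvec_val N d l : finvec N d l = if Nat.ltb l N then d l else 0%C.
Proof.
  unfold finvec. induction N as [|N IH]; simpl; auto.
  rewrite IH. unfold unitv. destruct (Nat.eqb_spec l N) as [->|Hne].
  - rewrite (proj2 (Nat.ltb_ge N N)), (proj2 (Nat.ltb_lt N (S N))) by lia. ring.
  - destruct (Nat.ltb_spec l N), (Nat.ltb_spec l (S N)); try lia; ring.
Qed.

Lemma finvec_fin_supp N d : fin_supp N (finvec N d).
Proof. intros l Hl. rewrite finvec_val. destruct (Nat.ltb_spec l N); [lia | auto]. Qed.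

Lemma inX_finvec P N d : inX P (finvec N d).
Proof. apply (inX_fin_supp P _ N), finvec_fin_supp. Qed.

Lemma normX_pinfty_le v B : (forall n, Cmod (v n) <= B) -> normX p_infty v <= B.
Proof.
  intros H. simpl. destruct (Lub_Rbar_correct (fun s => exists n, s = Cmod (v n))) as [_ Hlub].
  assert (Hle : Rbar_le (Lub_Rbar (fun s => exists n, s = Cmod (v n))) B)
    by (apply Hlub; intros s [n ->]; apply H).
  assert (0 <= B) by (generalize (H O) (Cmod_ge_0 (v O)); lra).
  destruct (Lub_Rbar _) as [l| |]; simpl in *; tauto.
Qed.

Lemma c0_bounded v : is_lim_seq (fun n => Cmod (v n)) 0 -> exists B, forall n, Cmod (v n) <= B.
Proof.
  intros H. apply is_lim_seq_spec in H. destruct (H (mkposreal 1 Rlt_0_1)) as [N0 HN]. simpl in HN.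
  exists (1 + fsum Rplus 0 N0 (fun n => Cmod (v n))). intros n.
  assert (0 <= fsum Rplus 0 N0 (fun n => Cmod (v n))) by (apply fsum_nonneg; intros; apply Cmod_ge_0).
  destruct (Nat.lt_ge_cases n N0) as [Hn|Hn].
  - assert (Cmod (v n) <= fsum Rplus 0 N0 (fun n => Cmod (v n)))
      by (apply (fsum_term_le N0 (fun n => Cmod (v n))); auto; intros; apply Cmod_ge_0).
    lra.
  - specialize (HN n Hn). rewrite Rminus_0_r in HN. apply Rabs_lt_between in HN. lra.
Qed.

Lemma Cmod_le_normX_pinfty v : inX p_infty v -> forall n, Cmod (v n) <= normX p_infty v.
Proof.
  intros Hv n. simpl in Hv. destruct (c0_bounded v Hv) as [B HB]. simpl.
  destruct (Lub_Rbar_correct (fun s => exists n, s = Cmod (v n))) as [Hub Hl].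
  assert (H1 : Rbar_le (Cmod (v n)) (Lub_Rbar (fun s => exists n, s = Cmod (v n)))) by (apply Hub; eauto).
  assert (H2 : Rbar_le (Lub_Rbar (fun s => exists n, s = Cmod (v n))) B)
    by (apply Hl; intros s [k ->]; simpl; auto).
  destruct (Lub_Rbar _) as [l| |]; simpl in *; auto; contradiction.
Qed.

Lemma upd_id (x : nat -> nat -> C) k : upd x k (x k) = x.
Proof. extensionality l. unfold upd. destruct (Nat.eqb_spec l k); subst; auto. Qed.

Lemma inDom_upd m p x k v : inDom m p x -> inX (slot_exp p k) v -> inDom m p (upd x k v).
Proof. intros H Hv l Hl. unfold upd. destruct (Nat.eqb_spec l k); subst; auto. Qed.

Definition fill_slots (s : nat) (x w : nat -> nat -> C) : nat -> nat -> C :=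
  fun k => if Nat.ltb k s then x k else w (k - s)%nat.

Definition coef (T : (nat -> nat -> C) -> C) (i1 : nat) (i : nat -> nat) : C :=
  T (fun k => match k with O => unitv i1 | S k' => unitv (i k') end).

Section Forms.

Variables (m : nat) (p : Rbar) (T : (nat -> nat -> C) -> C).
Hypothesis ML : multilinear m p T.

Lemma form_upd_zero x s : inDom m p x -> (s < m)%nat -> T (upd x s (fun _ => 0%C)) = 0%C.
Proof.
  intros Hx Hs.
  assert (Z : inX (slot_exp p s) (fun _ => 0%C)) by (apply (inX_fin_supp _ _ 0); intros l _; auto).
  transitivity (T (upd x s (fun n => 0 * (fun _ => 0) n + 0 * (fun _ => 0) n)%C)).
  - do 2 f_equal. extensionality n. ring.
  - rewrite (ML x s Hx Hs _ _ 0%C 0%C Z Z). ring.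
Qed.

Lemma form_upd_finvec x s N d : inDom m p x -> (s < m)%nat ->
  T (upd x s (finvec N d)) = fsum Cplus 0%C N (fun n => d n * T (upd x s (unitv n)))%C.
Proof.
  intros Hx Hs. induction N as [|N IH]; [apply form_upd_zero; auto|].
  simpl. rewrite <- IH.
  replace (finvec (S N) d) with (fun l => 1 * finvec N d l + d N * unitv N l)%C
    by (extensionality l; unfold finvec; simpl; ring).
  rewrite ML by (auto; try apply inX_finvec; apply inX_unitv). ring.
Qed.

Hypothesis OF : only_first m T.

Lemma form_expand N r : forall s x c,
  (s + r = m)%nat -> (forall k, (k < s)%nat -> inX (slot_exp p k) (x k)) ->
  T (fill_slots s x (fun j => finvec N (c j)))
  = msum Cplus 0%C r N (fun i =>
      fsum Cmult 1%C r (fun j => c j (i j)) * T (fill_slots s x (fun j => unitv (i j))))%C.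
Proof.
  induction r as [|r IH]; intros s x c Hsr Hx.
  - simpl. rewrite Cmult_1_l. apply OF. intros k Hk. unfold fill_slots.
    destruct (Nat.ltb_spec k s); [auto | lia].
  - set (X := fill_slots s x (fun j => finvec N (c j))).
    assert (HX : inDom m p X).
    { intros k Hk. unfold X, fill_slots. destruct (Nat.ltb_spec k s); [auto | apply inX_finvec]. }
    assert (EX : X = upd X s (finvec N (c O))).
    { rewrite <- (upd_id X s) at 1. f_equal. unfold X, fill_slots.
      rewrite (proj2 (Nat.ltb_ge s s)), Nat.sub_diag by lia. auto. }
    rewrite EX, form_upd_finvec by (auto; lia). rewrite msum_succ. apply fsum_ext. intros n.
    assert (E1 : upd X s (unitv n) = fill_slots (S s) (upd x s (unitv n)) (fun j => finvec N (c (S j)))).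
    { extensionality k. unfold upd, X, fill_slots.
      destruct (Nat.eqb_spec k s) as [->|Hne].
      - rewrite (proj2 (Nat.ltb_lt s (S s))) by lia. auto.
      - destruct (Nat.ltb_spec k s), (Nat.ltb_spec k (S s)); try lia; auto.
        do 2 f_equal. lia. }
    rewrite E1, (IH (S s) (upd x s (unitv n)) (fun j => c (S j))).
    + rewrite <- msum_Cscal. apply msum_ext. intros i. rewrite fsum_Cmult_succ_l.
      assert (E2 : fill_slots s x (fun j => unitv (ncons n i j))
                   = fill_slots (S s) (upd x s (unitv n)) (fun j => unitv (i j))).
      { extensionality k. unfold upd, fill_slots.
        destruct (Nat.eqb_spec k s) as [->|Hne].
        - rewrite (proj2 (Nat.ltb_lt s (S s))), (proj2 (Nat.ltb_ge s s)), Nat.sub_diag by lia. auto.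
        - destruct (Nat.ltb_spec k s), (Nat.ltb_spec k (S s)); try lia; auto.
          replace (k - s)%nat with (S (k - S s)) by lia. reflexivity. }
      rewrite E2. simpl. ring.
    + lia.
    + intros k Hk. unfold upd. destruct (Nat.eqb_spec k s); [apply inX_unitv | apply Hx; lia].
Qed.

Lemma steinSum_as_form N th i1 : (1 <= m)%nat ->
  steinSum (m - 1) N (coef T i1) th
  = T (fill_slots 1 (fun _ => unitv i1) (fun j => finvec N (fun n => cis (th (j * N + n)%nat)))).
Proof.
  intros Hm.
  rewrite (form_expand N (m - 1) 1 (fun _ => unitv i1) (fun j n => cis (th (j * N + n)%nat)))
    by (try lia; intros; apply inX_unitv).
  unfold steinSum. apply msum_ext. intros i. rewrite Cmult_comm. f_equal. unfold coef. f_equal.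
  extensionality k. unfold fill_slots. destruct k; simpl; auto. rewrite Nat.sub_0_r. auto.
Qed.

End Forms.

(** * Duality between [l_p] and [l_q] *)

Lemma conj_exp_ge1 p : Rbar_le (Finite 2) p -> 1 <= conj_exp p.
Proof.
  intros H. destruct p as [r| |]; simpl in *; try lra; try contradiction.
  apply Rmult_le_reg_r with (r - 1); [lra|]. unfold Rdiv. rewrite Rmult_assoc, Rinv_l; lra.
Qed.

(* with the junk value [rpow 0 _ = 0] this holds at [x = 0] too *)
Lemma mul_rpow_sub2 x q : 0 <= x -> x * rpow x (q - 2) = rpow x (q - 1).
Proof.
  intros [Hx|<-]; [|rewrite !rpow_0; ring].
  rewrite <- (rpow_exp1 x) at 1 by lra. rewrite <- rpow_plus by auto. f_equal. ring.
Qed.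

Lemma pow2_mul_rpow_sub2 x q : 0 <= x -> x ^ 2 * rpow x (q - 2) = rpow x q.
Proof.
  intros Hx. replace (x ^ 2 * rpow x (q - 2)) with (x * (x * rpow x (q - 2))) by ring.
  rewrite mul_rpow_sub2 by auto. replace (q - 1) with (q + 1 - 2) by ring.
  rewrite mul_rpow_sub2 by auto. f_equal. ring.
Qed.

(* [(dual_coef q Z b_i)_i] is the unit vector of [l_p] on which [(b_i)_i] attains its [l_q] norm,
   when [Z = beta ^ (1 - 1/q)] with [beta = sum_i |b_i|^q]. *)
Definition dual_coef (q Z : R) (b : C) : C := (Cconj b * RtoC (rpow (Cmod b) (q - 2) / Z))%C.

Lemma Cmod_dual_coef q Z b : 0 < Z -> Cmod (dual_coef q Z b) = rpow (Cmod b) (q - 1) / Z.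
Proof.
  intros HZ. unfold dual_coef. rewrite Cmod_mult, Cmod_conj, Cmod_R, Rabs_pos_eq.
  - unfold Rdiv. rewrite <- Rmult_assoc, mul_rpow_sub2 by apply Cmod_ge_0. auto.
  - apply Rdiv_le_0_compat; [apply rpow_ge0 | auto].
Qed.

Lemma normX_dual_finvec p N b beta : Rbar_le (Finite 2) p -> 0 < beta ->
  beta = fsum Rplus 0 N (fun i => rpow (Cmod (b i)) (conj_exp p)) ->
  normX p (finvec N (fun i => dual_coef (conj_exp p) (rpow beta (1 - / conj_exp p)) (b i))) <= 1.
Proof.
  intros Hp Hb Hbeta. set (q := conj_exp p) in *. set (Z := rpow beta (1 - / q)).
  assert (HZ : 0 < Z) by (apply rpow_gt0; auto).
  destruct p as [r| |]; simpl in Hp; try contradiction.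
  - assert (Hq : q = r / (r - 1)) by reflexivity.
    rewrite (normX_fin_supp r _ N) by apply finvec_fin_supp.
    rewrite (fsum_ext_lt _ _ _ _ (fun n => / beta * rpow (Cmod (b n)) q)).
    + rewrite fsum_scal, <- Hbeta, Rinv_l, rpow_base1 by lra. lra.
    + intros n Hn. rewrite finvec_val, (proj2 (Nat.ltb_lt n N)), Cmod_dual_coef by auto.
      unfold Rdiv. rewrite rpow_mult_distr, rpow_rpow, rpow_inv
        by (try apply rpow_ge0; try apply Rlt_le, Rinv_0_lt_compat; auto; apply Cmod_ge_0).
      unfold Z. rewrite rpow_rpow by lra.
      replace ((q - 1) * r) with q by (rewrite Hq; field; lra).
      replace ((1 - / q) * r) with 1 by (rewrite Hq; field; lra).
      rewrite rpow_exp1 by lra. ring.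
  - apply normX_pinfty_le. intros n. rewrite finvec_val. destruct (Nat.ltb_spec n N).
    + rewrite Cmod_dual_coef by auto. unfold Z, q. simpl conj_exp.
      replace (1 - / 1) with 0 by field. replace (1 - 1) with 0 by ring.
      rewrite !(rpow_Rpower beta 0), Rpower_O by auto. unfold Rdiv. rewrite Rinv_1, Rmult_1_r.
      destruct (Cmod_ge_0 (b n)) as [Hx|<-]; [rewrite rpow_Rpower, Rpower_O by auto | rewrite rpow_0]; lra.
    + rewrite Cmod_0. lra.
Qed.

Definition in_unit_ball (m : nat) (p : Rbar) (x : nat -> nat -> C) : Prop :=
  inDom m p x /\ forall k, (k < m)%nat -> normX (slot_exp p k) (x k) <= 1.

Lemma lq_sum_first_slot_le m p T N y M : multilinear m p T -> Rbar_le (Finite 2) p -> (1 <= m)%nat ->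
  inDom m p y -> (forall k, (1 <= k < m)%nat -> normX (slot_exp p k) (y k) <= 1) ->
  (forall x, in_unit_ball m p x -> Cmod (T x) <= M) ->
  fsum Rplus 0 N (fun i => rpow (Cmod (T (upd y 0 (unitv i)))) (conj_exp p)) <= rpow M (conj_exp p).
Proof.
  intros ML Hp Hm Hy Hyn HM.
  assert (Hq := conj_exp_ge1 p Hp). set (q := conj_exp p) in *.
  set (b := fun i => T (upd y 0 (unitv i))).
  change (fsum Rplus 0 N (fun i => rpow (Cmod (b i)) q) <= rpow M q).
  set (beta := fsum Rplus 0 N (fun i => rpow (Cmod (b i)) q)).
  assert (B0 : 0 <= beta) by (apply fsum_nonneg; intros; apply rpow_ge0).
  destruct B0 as [Bp|Bz]; [|rewrite <- Bz; apply rpow_ge0].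
  set (Z := rpow beta (1 - / q)). assert (HZ : 0 < Z) by (apply rpow_gt0; auto).
  set (d := fun i => dual_coef q Z (b i)).
  assert (HT : T (upd y 0 (finvec N d)) = RtoC (beta / Z)).
  { rewrite (form_upd_finvec m p) by (auto; lia).
    rewrite (fsum_ext _ _ _ _ (fun n => RtoC (/ Z * rpow (Cmod (b n)) q))).
    - rewrite fsum_RtoC, fsum_scal. f_equal. unfold beta, Rdiv. ring.
    - intros n. unfold d, dual_coef. fold (b n).
      transitivity (RtoC (Cmod (b n) ^ 2) * RtoC (rpow (Cmod (b n)) (q - 2) / Z))%C;
        [rewrite Cmod2_conj; ring|].
      rewrite <- RtoC_mult, <- (pow2_mul_rpow_sub2 (Cmod (b n)) q) by apply Cmod_ge_0.
      f_equal. unfold Rdiv. ring. }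
  assert (Hdual : Cmod (T (upd y 0 (finvec N d))) <= M).
  { apply HM. split; [apply inDom_upd; auto; apply inX_finvec|].
    intros k Hk. unfold upd. destruct (Nat.eqb_spec k 0) as [->|Hk0].
    - apply (normX_dual_finvec p N b beta); auto.
    - apply Hyn. lia. }
  rewrite HT, Cmod_R, Rabs_pos_eq in Hdual by (apply Rdiv_le_0_compat; lra).
  assert (E : beta / Z = rpow beta (/ q)).
  { unfold Z, Rdiv. rewrite <- rpow_opp, <- (rpow_exp1 beta) at 1 by lra.
    rewrite <- rpow_plus by auto. f_equal. ring. }
  rewrite E in Hdual. rewrite <- (rpow_inv_l beta q) by lra.
  apply rpow_le_compat; [split; [apply rpow_ge0 | auto] | lra].
Qed.

(** * Continuous forms are bounded *)

Lemma Cmod_le_opnorm m p T K x : (forall y, in_unit_ball m p y -> Cmod (T y) <= K) ->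
  in_unit_ball m p x -> Cmod (T x) <= opnorm m p T.
Proof.
  intros HK [Hx1 Hx2]. unfold opnorm.
  destruct (Lub_Rbar_correct (fun s => exists x, inDom m p x /\
     (forall k, (k < m)%nat -> normX (slot_exp p k) (x k) <= 1) /\ s = Cmod (T x))) as [Hub Hl].
  assert (H1 := Hub (Cmod (T x)) (ex_intro _ x (conj Hx1 (conj Hx2 eq_refl)))).
  assert (H2 : Rbar_le (Lub_Rbar (fun s => exists x, inDom m p x /\
     (forall k, (k < m)%nat -> normX (slot_exp p k) (x k) <= 1) /\ s = Cmod (T x))) K).
  { apply Hl. intros s [y [Hy1 [Hy2 ->]]]. apply HK. split; auto. }
  destruct (Lub_Rbar _) as [l| |]; simpl in *; auto; contradiction.
Qed.

Definition proper_exp (P : Rbar) : Prop := P = p_infty \/ exists r, 0 < r /\ P = Finite r.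

Lemma proper_exp_slot p k : Rbar_le (Finite 2) p -> proper_exp (slot_exp p k).
Proof.
  intros Hp. destruct k; simpl; [|left; auto].
  destruct p as [r| |]; simpl in Hp; try contradiction; [right; exists r; split; auto; lra | left; auto].
Qed.

Lemma Cmod_RtoC_mult c z : 0 <= c -> Cmod (RtoC c * z)%C = c * Cmod z.
Proof. intros Hc. rewrite Cmod_mult, Cmod_R, Rabs_pos_eq; auto. Qed.

Lemma inX_scal P c v : proper_exp P -> 0 <= c -> inX P v -> inX P (fun n => RtoC c * v n)%C.
Proof.
  intros [->|[r [Hr ->]]] Hc Hv; simpl in *.
  - apply (is_lim_seq_ext (fun n => c * Cmod (v n))); [intros n; rewrite Cmod_RtoC_mult; auto|].
    replace (Finite 0) with (Rbar_mult c 0) by (simpl; f_equal; ring). apply is_lim_seq_scal_l; auto.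
  - apply (ex_series_ext (fun n => rpow c r * rpow (Cmod (v n)) r)).
    + intros n. rewrite Cmod_RtoC_mult by auto. symmetry. apply rpow_mult_distr; auto. apply Cmod_ge_0.
    + apply (ex_series_scal_l (K := R_AbsRing) (V := R_NormedModule) (rpow c r) _ Hv).
Qed.

Lemma normX_Cmod_ext P u v : (forall n, Cmod (u n) = Cmod (v n)) -> normX P u = normX P v.
Proof.
  intros H. destruct P as [r| |]; simpl.
  - f_equal. apply Series_ext. intros n. rewrite H. auto.
  - f_equal. apply Lub_Rbar_eqset. intros s. split; intros [n ->]; exists n; auto.
  - f_equal. apply Lub_Rbar_eqset. intros s. split; intros [n ->]; exists n; auto.
Qed.

Lemma normX_scal P c v : proper_exp P -> 0 < c -> inX P v ->
  normX P (fun n => RtoC c * v n)%C <= c * normX P v.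
Proof.
  intros [->|[r [Hr ->]]] Hc Hv.
  - apply normX_pinfty_le. intros n. rewrite Cmod_RtoC_mult by lra.
    apply Rmult_le_compat_l; [lra | apply Cmod_le_normX_pinfty; auto].
  - simpl. right.
    rewrite (Series_ext _ (fun n => rpow c r * rpow (Cmod (v n)) r)), Series_scal_l.
    2:{ intros n. rewrite Cmod_RtoC_mult by lra. apply rpow_mult_distr; [lra | apply Cmod_ge_0]. }
    set (S := Series (fun n => rpow (Cmod (v n)) r)).
    destruct (Rle_lt_dec S 0) as [Hs|Hs].
    + rewrite !rpow_nonpos; auto; [ring|]. assert (0 < rpow c r) by (apply rpow_gt0; auto). nra.
    + rewrite rpow_mult_distr, rpow_inv_r; auto; try lra. apply rpow_ge0.
Qed.

Section Bounded.

Variables (m : nat) (p : Rbar) (T : (nat -> nat -> C) -> C).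
Hypotheses (Hp : Rbar_le (Finite 2) p) (ML : multilinear m p T) (OF : only_first m T).

Lemma form_homogeneous c x : 0 <= c -> inDom m p x ->
  T (fun k n => RtoC c * x k n)%C = (RtoC (c ^ m) * T x)%C.
Proof.
  intros Hc Hx.
  set (sc := fun j k => if Nat.ltb k j then (fun n => RtoC c * x k n)%C else x k).
  assert (H : forall j, (j <= m)%nat -> inDom m p (sc j) /\ T (sc j) = (RtoC (c ^ j) * T x)%C).
  { induction j as [|j IH]; intros Hj.
    - replace (sc O) with x by (extensionality k; unfold sc; destruct (Nat.ltb_spec k 0); [lia | auto]).
      split; auto. simpl. ring.
    - destruct (IH ltac:(lia)) as [D E]. split.
      + intros k Hk. unfold sc.
        destruct (Nat.ltb_spec k (S j)); [apply inX_scal|]; auto using proper_exp_slot.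
      + assert (E1 : sc (S j) = upd (sc j) j (fun n => RtoC c * x j n + RtoC 0 * x j n)%C).
        { extensionality k. unfold sc, upd. destruct (Nat.eqb_spec k j) as [->|Hne].
          - rewrite (proj2 (Nat.ltb_lt j (S j))) by lia. extensionality n. ring.
          - destruct (Nat.ltb_spec k (S j)), (Nat.ltb_spec k j); auto; lia. }
        assert (E2 : upd (sc j) j (x j) = sc j).
        { extensionality k. unfold sc, upd. destruct (Nat.eqb_spec k j) as [->|]; auto.
          rewrite (proj2 (Nat.ltb_ge j j)) by lia. auto. }
        rewrite E1, ML, E2, E by (auto; try lia; apply Hx; lia).
        rewrite <- tech_pow_Rmult, RtoC_mult. ring. }
  destruct (H m ltac:(lia)) as [_ E]. rewrite <- E. apply OF.
  intros k Hk. unfold sc. rewrite (proj2 (Nat.ltb_lt k m)) by lia. auto.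
Qed.

Hypothesis CF : continuous_form m p T.

(* continuity at [0] gives a ball of radius [d] on which [|T| < 1]; rescale by [d / 2] *)
Lemma continuous_form_bounded : (1 <= m)%nat ->
  exists K, forall x, in_unit_ball m p x -> Cmod (T x) <= K.
Proof.
  intros Hm. set (x0 := fun (_ : nat) (_ : nat) => 0%C).
  assert (D0 : inDom m p x0) by (intros k _; apply (inX_fin_supp _ _ 0); intros l _; auto).
  destruct (CF x0 D0 1 Rlt_0_1) as [d [Hd Hc]].
  assert (T0 : T x0 = 0%C).
  { assert (E0 : upd x0 0%nat (fun _ => 0%C) = x0)
      by (extensionality k; unfold upd, x0; destruct (Nat.eqb k 0); auto).
    rewrite <- E0. apply (form_upd_zero m p); auto. }
  set (c := d / 2). assert (cp : 0 < c) by (unfold c; lra).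
  exists (/ c ^ m). intros x [Dx Nx].
  set (y := fun k n => (RtoC c * x k n)%C).
  assert (Dy : inDom m p y) by (intros k Hk; apply inX_scal; auto using proper_exp_slot; lra).
  assert (Ny : forall k, (k < m)%nat -> normX (slot_exp p k) (fun n => x0 k n - y k n)%C < d).
  { intros k Hk. unfold x0, y.
    rewrite (normX_Cmod_ext _ _ (fun n => RtoC c * x k n)%C)
      by (intros n; replace (0 - RtoC c * x k n)%C with (- (RtoC c * x k n))%C by ring; apply Cmod_opp).
    eapply Rle_lt_trans; [apply normX_scal; auto using proper_exp_slot|].
    specialize (Nx k Hk). unfold c. nra. }
  specialize (Hc y Dy Ny). rewrite T0 in Hc. replace (T y - 0)%C with (T y) in Hc by ring.
  unfold y in Hc. rewrite form_homogeneous, Cmod_RtoC_mult in Hc by (auto; try apply pow_le; lra).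
  assert (0 < c ^ m) by (apply pow_lt; auto).
  apply Rmult_le_reg_l with (c ^ m); auto. rewrite Rinv_r by lra. lra.
Qed.

End Bounded.

(** * The mixed inequality *)

Lemma khinchin_ok_rpow k q c N a : 1 <= q -> 0 <= c -> khinchin_ok k q c ->
  rpow c q * rpow (msum Rplus 0 k N (fun i => Cmod (a i) ^ 2)) (q / 2)
  <= steinE (k * N) (fun th => rpow (Cmod (steinSum k N a th)) q).
Proof.
  intros Hq Hc KH. specialize (KH N a).
  set (E := steinE (k * N) (fun th => rpow (Cmod (steinSum k N a th)) q)) in *.
  assert (E0 : 0 <= E).
  { unfold E. rewrite steinE_mean, steinSum_stein_multi.
    apply mean_ge0; [apply buc_rpow_Cmod_stein_multi; lra | intros; apply rpow_ge0]. }
  assert (M0 : 0 <= msum Rplus 0 k N (fun i => Cmod (a i) ^ 2))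
    by (apply msum_nonneg; intros; apply pow2_ge_0).
  assert (Hpow : rpow (c * sqrt (msum Rplus 0 k N (fun i => Cmod (a i) ^ 2))) q <= rpow (rpow E (/ q)) q)
    by (apply rpow_le_compat; [split; [apply Rmult_le_pos; auto; apply sqrt_pos | auto] | lra]).
  rewrite rpow_inv_l, rpow_mult_distr, rpow_sqrt in Hpow by (auto; try lra; apply sqrt_pos).
  exact Hpow.
Qed.

Lemma normX_zero_le P : proper_exp P -> normX P (fun _ => 0%C) <= 0.
Proof.
  intros [->|[r [Hr ->]]].
  - apply normX_pinfty_le. intros. rewrite Cmod_0. lra.
  - rewrite (normX_fin_supp r _ 0) by (intros ? ?; auto). simpl. rewrite rpow_0. lra.
Qed.

Section MixedInequality.

Variables (p : Rbar) (m : nat) (T : (nat -> nat -> C) -> C).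
Hypotheses (Hp : Rbar_le (Finite 2) p) (Hm : (2 <= m)%nat)
  (OF : only_first m T) (ML : multilinear m p T) (CF : continuous_form m p T).

Lemma Cmod_le_opnorm_ball x : in_unit_ball m p x -> Cmod (T x) <= opnorm m p T.
Proof.
  destruct (continuous_form_bounded m p T Hp ML OF CF ltac:(lia)) as [K HK].
  apply (Cmod_le_opnorm m p T K); auto.
Qed.

Lemma opnorm_ge0 : 0 <= opnorm m p T.
Proof.
  eapply Rle_trans; [apply (Cmod_ge_0 (T (fun _ _ => 0%C)))|]. apply Cmod_le_opnorm_ball. split.
  - intros k _. apply (inX_fin_supp _ _ 0). intros ? ?; auto.
  - intros k _. eapply Rle_trans; [apply normX_zero_le, proper_exp_slot; auto | lra].
Qed.

Lemma sum_steinSum_rpow_le N th :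
  fsum Rplus 0 N (fun i1 => rpow (Cmod (steinSum (m - 1) N (coef T i1) th)) (conj_exp p))
  <= rpow (opnorm m p T) (conj_exp p).
Proof.
  set (Y := fill_slots 1 (fun _ _ => 0%C) (fun j => finvec N (fun n => cis (th (j * N + n)%nat)))).
  rewrite (fsum_ext _ _ _ _ (fun i1 => rpow (Cmod (T (upd Y 0 (unitv i1)))) (conj_exp p))).
  - apply (lq_sum_first_slot_le m p T N Y); auto; try lia; [| |apply Cmod_le_opnorm_ball].
    + intros k Hk. unfold Y, fill_slots. destruct (Nat.ltb_spec k 1); [|apply inX_finvec].
      apply (inX_fin_supp _ _ 0). intros ? ?; auto.
    + intros [|k] Hk; [lia|]. unfold Y, fill_slots. simpl.
      apply normX_pinfty_le. intros n. rewrite finvec_val.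
      destruct (Nat.ltb_spec n N); [rewrite Cmod_cis | rewrite Cmod_0]; lra.
  - intros i1. rewrite (steinSum_as_form m p T) by (auto; lia). do 3 f_equal.
    extensionality k. unfold upd, Y, fill_slots. destruct k; reflexivity.
Qed.

Lemma khinchin_ok_mixed_sum_le c N : 0 < c -> khinchin_ok (m - 1) (conj_exp p) c ->
  c * mixed_sum m (conj_exp p) T N <= opnorm m p T.
Proof.
  intros Hc KH. assert (Hq := conj_exp_ge1 p Hp). set (q := conj_exp p) in *.
  set (Sig := fsum Rplus 0 N (fun i1 =>
                rpow (msum Rplus 0 (m - 1) N (fun i => Cmod (coef T i1 i) ^ 2)) (q / 2))).
  assert (Sig0 : 0 <= Sig) by (apply fsum_nonneg; intros; apply rpow_ge0).
  assert (Hsum : rpow c q * Sig <= rpow (opnorm m p T) q).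
  { unfold Sig. rewrite <- fsum_scal.
    eapply Rle_trans; [apply fsum_le; intros i1; apply (khinchin_ok_rpow _ _ _ _ _ Hq); auto; lra|].
    rewrite (fsum_ext _ _ _ _ (fun i1 => mean ((m - 1) * N) 0
               (fun th => rpow (Cmod (stein_multi (m - 1) N 0 (coef T i1) th)) q) (fun _ => 0)))
      by (intros; apply steinE_mean).
    rewrite <- mean_fsum by (intros; apply buc_rpow_Cmod_stein_multi; lra).
    rewrite <- (mean_const ((m - 1) * N) 0 (rpow (opnorm m p T) q) (fun _ => 0)).
    apply mean_le; [| apply buc_const | intros th; apply sum_steinSum_rpow_le].
    apply buc_fsum. intros; apply buc_rpow_Cmod_stein_multi; lra. }
  unfold mixed_sum. change (c * rpow Sig (/ q) <= opnorm m p T).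
  rewrite <- (rpow_inv_r c q), <- rpow_mult_distr, <- (rpow_inv_r (opnorm m p T) q)
    by (try apply rpow_ge0; try apply opnorm_ge0; lra).
  apply rpow_le_compat; [|apply Rinv_0_lt_compat; lra].
  split; [apply Rmult_le_pos; [apply rpow_ge0 | auto] | auto].
Qed.

End MixedInequality.

Lemma S_const_pos_sup k q : 1 <= q ->
  0 < S_const k q /\ forall b, (forall c, khinchin_ok k q c -> c <= b) -> S_const k q <= b.
Proof.
  intros Hq. unfold S_const.
  destruct (Lub_Rbar_correct (khinchin_ok k q)) as [Hub Hlub].
  assert (H1 := Hub _ (khinchin_ok_inv_sqrt2_pow k q Hq)).
  assert (H2 : Rbar_le (Lub_Rbar (khinchin_ok k q)) 1)
    by (apply Hlub; intros c Hc; apply (khinchin_ok_le_1 k q); auto).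
  assert (H0 : 0 < (/ sqrt 2) ^ k) by (apply pow_lt, Rinv_0_lt_compat, sqrt_lt_R0; lra).
  destruct (Lub_Rbar (khinchin_ok k q)) as [L| |]; simpl in H1, H2; try contradiction.
  simpl. split; [lra|]. intros b Hb. apply (Hlub (Finite b)). intros c Hc. apply Hb; auto.
Qed.

Lemma le_inv_S_const_mul k q x y : 1 <= q -> 0 <= x -> 0 <= y ->
  (forall c, 0 < c -> khinchin_ok k q c -> c * x <= y) -> x <= / S_const k q * y.
Proof.
  intros Hq [Hx|<-] Hy Hc; destruct (S_const_pos_sup k q Hq) as [HS Hsup];
    [|apply Rmult_le_pos; [apply Rlt_le, Rinv_0_lt_compat|]; auto].
  assert (Hb : S_const k q <= y / x).
  { apply Hsup. intros c Hkc. destruct (Rle_lt_dec c 0) as [Hc0|Hc0].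
    - apply Rle_trans with 0; [auto | apply Rdiv_le_0_compat; auto].
    - apply Rmult_le_reg_r with x; auto. unfold Rdiv. rewrite Rmult_assoc, Rinv_l, Rmult_1_r by lra.
      apply Hc; auto. }
  apply Rmult_le_reg_l with (S_const k q); auto. rewrite <- Rmult_assoc, Rinv_r, Rmult_1_l by lra.
  apply Rmult_le_compat_r with (r := x) in Hb; [|lra].
  unfold Rdiv in Hb. rewrite Rmult_assoc, Rinv_l, Rmult_1_r in Hb by lra. exact Hb.
Qed.

Theorem mainTheorem5 (p : Rbar) (m : nat) (T : (nat -> nat -> C) -> C) :
  Rbar_le (Finite 2) p -> (2 <= m)%nat ->
  only_first m T -> multilinear m p T -> continuous_form m p T ->
  forall N : nat,
    mixed_sum m (conj_exp p) T N <= / S_const (m - 1) (conj_exp p) * opnorm m p T.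
Proof.
  intros Hp Hm OF ML CF N.
  apply le_inv_S_const_mul.
  - apply conj_exp_ge1; auto.
  - apply rpow_ge0.
  - apply (opnorm_ge0 p m T); auto.
  - intros c Hc HK. apply khinchin_ok_mixed_sum_le; auto.
Qed.
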